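(* Let $N\geq 2$ and let $\sigma_1,\dots,\sigma_N:\mathbb{R}\to\mathbb{R}$ be functions admitting a Taylor decomposition on $\mathbb{R}$, i.e. $\sigma_i(x)=\sum_{t\ge0}\frac{\sigma_i^{(t)}(0)}{t!}x^t$ for all $x\in\mathbb{R}$. For $i=1,\dots,N$ define $f_i(x)=\sum_{t\geq 0}\frac{|\sigma_i^{(t)}(0)|}{t!}x^t$. Then the function on $\mathcal{I}\times\mathcal{I}$ $$K_N(\mathbf{X},\mathbf{X}'):=f_N\circ\cdots\circ f_2\Big(\sum_{i=1}^{n} f_1\big(\langle \mathbf{X}_i,\mathbf{X}'_i\rangle_{\mathbb{R}^{d}}\big)\Big)$$ is a positive (semi-)definite kernel on $\mathcal{I}$, and its RKHS $H_N$ contains $\mathcal{F}_{(\sigma_i)_{i=1}^N}$, the set of all functions computed by convolutional networks with activations $\sigma_1,\dots,\sigma_N$ (for every choice of numbers of filters and weights). Moreover, if $\sigma_i^{(t)}(0)\neq 0$ for all $i\in\{1,\dots,N\}$ and all $t\geq 0$, then $K_N$ is $c$-universal on $\mathcal{I}$, i.e. $K_N$ is continuous and $H_N$ is dense in $\mathcal{C}(\mathcal{I})$ for the uniform norm.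
   Context: Let $d\geq 2$, $n\geq 1$, $S^{d-1}\subset\mathbb{R}^d$ the unit sphere and $\mathcal{I}=(S^{d-1})^n$; write $\mathbf{X}=(\mathbf{X}_1,\dots,\mathbf{X}_n)\in\mathcal{I}$ with $\mathbf{X}_i\in S^{d-1}$ (normalized image patches). Convolutional network: fix $N\ge 2$, activations $\sigma_1,\dots,\sigma_N$, and integers $d_1=d$, $p_1=1$, $n_1=n$; for $k=2,\dots,N$ integers $p_k,d_k,n_k\geq1$; an integer $p_{N+1}\ge1$; and $d_{N+1}=n_N$, $n_{N+1}=1$, with $n_k+d_k-1\le n_{k-1}$ for $k=2,\dots,N+1$. Fix real pooling factors $(\gamma^k_{i,j})_{i,j=1}^{n_k}$ for $k=1,\dots,N$. Weights: $W^k\in\mathbb{R}^{p_{k+1}\times d_kp_k}$ with rows $w^k_1,\dots,w^k_{p_{k+1}}\in\mathbb{R}^{d_kp_k}$ for $k=1,\dots,N$, and $W^{N+1}\in\mathbb{R}^{d_{N+1}p_{N+1}}$. Given $\mathbf{X}^1\in\mathcal{I}$ (viewed as $n_1$ vectors $\mathbf{X}^1_q\in\mathbb{R}^{d_1p_1}$), define recursively for $k=1,\dots,N$: $Z^{k+1}(i,j)=\sum_{q=1}^{n_k}\gamma^k_{i,q}\,\sigma_k(\langle \mathbf{X}^k_q,w^k_j\rangle)$ for $i\le n_k$, $j\le p_{k+1}$; $U_i=(Z^{k+1}(i,1),\dots,Z^{k+1}(i,p_{k+1}))\in\mathbb{R}^{p_{k+1}}$; and $\mathbf{X}^{k+1}_q=(U_q,U_{q+1},\dots,U_{q+d_{k+1}-1})\in\mathbb{R}^{d_{k+1}p_{k+1}}$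 for $q=1,\dots,n_{k+1}$ (patch extraction). The network function is $\mathcal{N}_W(\mathbf{X}^1)=\langle \mathbf{X}^{N+1}_1,W^{N+1}\rangle$. $\mathcal{F}_{(\sigma_i)_{i=1}^N,(p_i)}$ is the set of all $\mathcal{N}_W$ over all weights, and $\mathcal{F}_{(\sigma_i)_{i=1}^N}$ is the union of these sets over all choices of the numbers of filters $p_2,\dots,p_{N+1}\ge1$ (the sizes $d_k,n_k$ and pooling factors being fixed arbitrarily). *)

From Stdlib Require Import Reals Lra Lia Factorial.
Open Scope R_scope.

Fixpoint rsum (n : nat) (f : nat -> R) : R :=
  match n with O => 0 | S n' => rsum n' f + f n' end.

(* Points of R^{d x n}: X i k = k-th coordinate of patch X_i (0-indexed). *)
Definition Pt := nat -> nat -> R.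

Definition inI (d n : nat) (X : Pt) : Prop :=
  forall i, (i < n)%nat -> rsum d (fun k => X i k ^ 2) = 1.

Definition dist (d n : nat) (X Y : Pt) : R :=
  sqrt (rsum n (fun i => rsum d (fun k => (X i k - Y i k) ^ 2))).

Definition deriv_tower (s : R -> R) (D : nat -> R -> R) : Prop :=
  D O = s /\ forall t x, derivable_pt_lim (D t) x (D (S t) x).

Definition taylor_decomp (s : R -> R) (D : nat -> R -> R) : Prop :=
  forall x, infinite_sum (fun t => D t 0 / INR (fact t) * x ^ t) (s x).

Definition kernel := Pt -> Pt -> R.

Definition psd_kernel (inS : Pt -> Prop) (K : kernel) : Prop :=
  (forall x y, inS x -> inS y -> K x y = K y x) /\
  (forall (m : nat) (c : nat -> R) (x : nat -> Pt),
     (forall i, (i < m)%nat -> inS (x i)) ->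
     0 <= rsum m (fun i => rsum m (fun j => c i * c j * K (x i) (x j)))).

(* finite kernel combinations h = sum_{i<m} a_i K(., y_i) *)
Record combo := Combo { cm : nat; ca : nat -> R; cy : nat -> Pt }.

Definition combo_eval (K : kernel) (h : combo) (x : Pt) : R :=
  rsum (cm h) (fun i => ca h i * K x (cy h i)).

Definition combo_in (inS : Pt -> Prop) (h : combo) : Prop :=
  forall i, (i < cm h)%nat -> inS (cy h i).

Definition bil (K : kernel) (h g : combo) : R :=
  rsum (cm h) (fun i => rsum (cm g) (fun j => ca h i * ca g j * K (cy h i) (cy g j))).

Definition norm2_diff (K : kernel) (h g : combo) : R :=
  bil K h h - 2 * bil K h g + bil K g g.

(* RKHS of K on S (Moore-Aronszajn completion): f is the pointwise limit on S
   of a sequence of kernel combinations, Cauchy in the pre-RKHS norm. *)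
Definition in_RKHS (inS : Pt -> Prop) (K : kernel) (f : Pt -> R) : Prop :=
  exists h : nat -> combo,
    (forall p, combo_in inS (h p)) /\
    (forall eps, eps > 0 -> exists M, forall p q, (p >= M)%nat -> (q >= M)%nat ->
        norm2_diff K (h p) (h q) < eps) /\
    (forall x, inS x -> Un_cv (fun p => combo_eval K (h p) x) (f x)).

Definition continuous_on_I (d n : nat) (g : Pt -> R) : Prop :=
  forall x, inI d n x -> forall eps, eps > 0 -> exists del, del > 0 /\
    forall y, inI d n y -> dist d n x y < del -> Rabs (g y - g x) < eps.

Definition kernel_continuous_on_I (d n : nat) (K : kernel) : Prop :=
  forall x y, inI d n x -> inI d n y -> forall eps, eps > 0 -> exists del, del > 0 /\
    forall x' y', inI d n x' -> inI d n y' -> dist d n x x' < del -> dist d n y y' < del ->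
      Rabs (K x' y' - K x y) < eps.

Definition c_universal (d n : nat) (K : kernel) : Prop :=
  kernel_continuous_on_I d n K /\
  forall g, continuous_on_I d n g -> forall eps, eps > 0 ->
    exists h, in_RKHS (inI d n) K h /\ forall x, inI d n x -> Rabs (h x - g x) < eps.

(* fcomp f j = f_{j+1} o ... o f_2  (fcomp f 0 = id) *)
Fixpoint fcomp (f : nat -> R -> R) (j : nat) (x : R) : R :=
  match j with O => x | S j' => f (S (S j')) (fcomp f j' x) end.

Definition KN (d n N : nat) (f : nat -> R -> R) : kernel :=
  fun X X' => fcomp f (N - 1) (rsum n (fun i => f 1%nat (rsum d (fun k => X i k * X' i k)))).

(* sigma k : activation of layer k (k = 1..N); dd k, nn k, pp k : d_k, n_k, p_k;
   gam k i q : pooling factor gamma^k_{i,q} (0-indexed);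
   W k j m : m-th entry of row w^k_j of W^k (0-indexed); WN : W^{N+1}.
   Layer vectors: Xk q m = m-th coordinate of X^k_q (0-indexed). *)
Section CNN.
Variables (sigma : nat -> R -> R) (dd nn pp : nat -> nat)
          (gam : nat -> nat -> nat -> R) (W : nat -> nat -> nat -> R).

Definition Zl (k : nat) (Xk : Pt) (i j : nat) : R :=
  rsum (nn k) (fun q => gam k i q * sigma k (rsum (dd k * pp k) (fun m => Xk q m * W k j m))).

(* X^{k+1}_q = (U_q, ..., U_{q+d_{k+1}-1}), U_i = (Z^{k+1}(i,j))_j *)
Definition nextl (k : nat) (Xk : Pt) : Pt :=
  fun q m => Zl k Xk (q + m / pp (S k))%nat (m mod pp (S k))%nat.

(* Xs X k = X^{k+1} *)
Fixpoint Xs (X : Pt) (k : nat) : Pt :=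
  match k with O => X | S k' => nextl k (Xs X k') end.

Definition cnn (N : nat) (WN : nat -> R) (X : Pt) : R :=
  rsum (dd (S N) * pp (S N)) (fun m => Xs X N O m * WN m).
End CNN.

Definition arch_ok (d n N : nat) (dd nn pp : nat -> nat) : Prop :=
  dd 1%nat = d /\ pp 1%nat = 1%nat /\ nn 1%nat = n /\
  (forall k, (2 <= k <= N)%nat -> (1 <= pp k)%nat /\ (1 <= dd k)%nat /\ (1 <= nn k)%nat) /\
  (1 <= pp (S N))%nat /\ dd (S N) = nn N /\ nn (S N) = 1%nat /\
  (forall k, (2 <= k <= S N)%nat -> (nn k + dd k - 1 <= nn (k - 1))%nat).

(* [K_N] is obtained from the linear kernels [<X_i, X'_i>] by sums and by composition with
   power series with nonnegative coefficients, which preserve positive semidefiniteness by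
   the Schur product theorem.  A function [h] lies in the RKHS of [K] as soon as
   [h(x) h(y) <= c K(x, y)] in the Loewner order.  This domination is stable under sums and
   scalings, and composing with [sigma = sum b_t x^t] turns domination by [K] into domination
   by [f o K] with [f = sum |b_t| x^t]; following the layers, every unit of the network, hence
   its output, is dominated by [K_N].  When no Taylor coefficient vanishes, [K_N] dominates the
   kernels [prod_i (1 + <X_i, X'_i>)^T], so every polynomial in the coordinates lies in [H_N],
   and Stone-Weierstrass on the compact set [I] gives density.  Continuity of [K_N] comes from
   local Lipschitz bounds for power series. *)

From Pilot Require Import Defs.
From Stdlib Require Import Reals Factorial.
From Stdlib Require Import Lra Lia ClassicalEpsilon List.
Open Scope R_scope.

Lemma rsum_ext m F G : (forall i, (i < m)%nat -> F i = G i) -> rsum m F = rsum m G.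
Proof.
  induction m as [|m IH]; simpl; intros H; auto.
  rewrite IH by (intros; apply H; lia). rewrite H by lia. reflexivity.
Qed.

Lemma rsum_plus m F G : rsum m (fun i => F i + G i) = rsum m F + rsum m G.
Proof. induction m; simpl; [lra|]. rewrite IHm; lra. Qed.

Lemma rsum_minus m F G : rsum m (fun i => F i - G i) = rsum m F - rsum m G.
Proof. induction m; simpl; [lra|]. rewrite IHm; lra. Qed.

Lemma rsum_scal m r F : rsum m (fun i => r * F i) = r * rsum m F.
Proof. induction m; simpl; [lra|]. rewrite IHm; lra. Qed.

Lemma rsum_scalr m r F : rsum m (fun i => F i * r) = rsum m F * r.
Proof. induction m; simpl; [lra|]. rewrite IHm; lra. Qed.

Lemma rsum_const m r : rsum m (fun _ => r) = INR m * r.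
Proof. induction m as [|m IH]; simpl; [lra|]. rewrite IH. destruct m; simpl; lra. Qed.

Lemma rsum_0 m : rsum m (fun _ => 0) = 0.
Proof. rewrite rsum_const. lra. Qed.

Lemma rsum_nonneg m F : (forall i, (i < m)%nat -> 0 <= F i) -> 0 <= rsum m F.
Proof.
  induction m; simpl; intros H; [lra|].
  pose proof (H m ltac:(lia)). pose proof (IHm ltac:(intros; apply H; lia)). lra.
Qed.

Lemma rsum_le m F G : (forall i, (i < m)%nat -> F i <= G i) -> rsum m F <= rsum m G.
Proof.
  induction m; simpl; intros H; [lra|].
  pose proof (H m ltac:(lia)). pose proof (IHm ltac:(intros; apply H; lia)). lra.
Qed.

Lemma rsum_app m1 m2 F : rsum (m1 + m2) F = rsum m1 F + rsum m2 (fun i => F (m1 + i)%nat).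
Proof.
  induction m2; simpl.
  - rewrite Nat.add_0_r; lra.
  - rewrite Nat.add_succ_r; simpl. rewrite IHm2; lra.
Qed.

Lemma rsum_comm m p F :
  rsum m (fun i => rsum p (fun j => F i j)) = rsum p (fun j => rsum m (fun i => F i j)).
Proof. induction m; simpl; [rewrite rsum_0 | rewrite IHm, <- rsum_plus]; auto. Qed.

Lemma Rabs_rsum_le m F : Rabs (rsum m F) <= rsum m (fun i => Rabs (F i)).
Proof.
  induction m; simpl.
  - rewrite Rabs_R0; lra.
  - eapply Rle_trans; [apply Rabs_triang | lra].
Qed.

Lemma rsum_delta m k u F : (k < m)%nat ->
  rsum m (fun j => (if Nat.eqb j k then u else 0) * F j) = u * F k.
Proof.
  induction m; intros H; simpl; [lia|].
  destruct (Nat.eqb_spec m k) as [->|Hmk].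
  - rewrite (rsum_ext _ _ (fun _ => 0)), rsum_0; [lra|].
    intros i Hi. destruct (Nat.eqb_spec i k); [lia | lra].
  - rewrite IHm by lia. lra.
Qed.

Lemma rsum_split_at m k F : (k < m)%nat ->
  rsum m F = F k + rsum m (fun j => if Nat.eqb j k then 0 else F j).
Proof.
  intros H.
  rewrite (rsum_ext m F (fun j => (if Nat.eqb j k then 1 else 0) * F j
                                 + (if Nat.eqb j k then 0 else F j)))
    by (intros j _; destruct (Nat.eqb j k); lra).
  rewrite rsum_plus, rsum_delta by auto. lra.
Qed.

Lemma rsum_term_le m k F : (forall i, (i < m)%nat -> 0 <= F i) -> (k < m)%nat -> F k <= rsum m F.
Proof.
  intros H Hk. rewrite (rsum_split_at m k) by auto.
  enough (0 <= rsum m (fun j => if Nat.eqb j k then 0 else F j)) by lra.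
  apply rsum_nonneg. intros i Hi; destruct (Nat.eqb i k); auto; lra.
Qed.

Lemma rsum_le_length m m' F : (forall i, 0 <= F i) -> (m <= m')%nat -> rsum m F <= rsum m' F.
Proof.
  intros H Hm. replace m' with (m + (m' - m))%nat by lia. rewrite rsum_app.
  enough (0 <= rsum (m' - m) (fun i => F (m + i)%nat)) by lra.
  apply rsum_nonneg; auto.
Qed.

Lemma sum_f_R0_rsum s n : sum_f_R0 s n = rsum (S n) s.
Proof. induction n; simpl; [lra|]. simpl in IHn. rewrite IHn; simpl; lra. Qed.

Lemma infinite_sum_ext s s' l : (forall t, s t = s' t) -> infinite_sum s l -> infinite_sum s' l.
Proof.
  intros E H e He. destruct (H e He) as [N HN]. exists N. intros p Hp.
  rewrite sum_f_R0_rsum, <- (rsum_ext (S p) s s') by auto. rewrite <- sum_f_R0_rsum. auto.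
Qed.

Lemma cv_const r : Un_cv (fun _ => r) r.
Proof. intros e He; exists O; intros; unfold R_dist; rewrite Rminus_diag, Rabs_R0; auto. Qed.

Lemma cv_rsum m (F : nat -> nat -> R) (l : nat -> R) :
  (forall i, (i < m)%nat -> Un_cv (fun p => F p i) (l i)) ->
  Un_cv (fun p => rsum m (F p)) (rsum m l).
Proof.
  induction m; intros H; simpl.
  - apply cv_const.
  - apply CV_plus; [apply IHm; intros |]; apply H; lia.
Qed.

Lemma infinite_sum_cv s l : infinite_sum s l -> Un_cv (fun M => rsum M s) l.
Proof.
  intros H e He. destruct (H e He) as [N HN]. exists (S N). intros [|M] HM; [lia|].
  rewrite <- sum_f_R0_rsum. apply HN. lia.
Qed.

Lemma Rabs_le_between x a : Rabs x <= a -> - a <= x <= a.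
Proof. unfold Rabs; destruct (Rcase_abs x); intros; lra. Qed.

Lemma cv_le u l b : Un_cv u l -> (forall p, u p <= b) -> l <= b.
Proof.
  intros H Hb. destruct (Rle_dec l b) as [|Hlb]; auto. exfalso.
  destruct (H (l - b)) as [P HP]; [lra|].
  specialize (HP P (le_n _)). specialize (Hb P). unfold R_dist in HP. apply Rabs_def2 in HP. lra.
Qed.

Lemma cv_ge_eventually u l b N : Un_cv u l -> (forall p, (p >= N)%nat -> b <= u p) -> b <= l.
Proof.
  intros H Hb. destruct (Rle_dec b l) as [|Hbl]; auto. exfalso.
  destruct (H (b - l)) as [P HP]; [lra|].
  specialize (HP (max P N) ltac:(lia)). specialize (Hb (max P N) ltac:(lia)).
  unfold R_dist in HP. apply Rabs_def2 in HP. lra.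
Qed.

Lemma cv_ge u l b : Un_cv u l -> (forall p, b <= u p) -> b <= l.
Proof. intros H Hb. apply (cv_ge_eventually u l b O H). auto. Qed.

Lemma Rabs_le_of_cv u l b : Un_cv u l -> (forall p, Rabs (u p) <= b) -> Rabs l <= b.
Proof.
  intros H Hb. apply Rabs_le. split.
  - apply (cv_ge u); auto. intros p. specialize (Hb p). apply Rabs_le_between in Hb. lra.
  - apply (cv_le u); auto. intros p. specialize (Hb p). apply Rabs_le_between in Hb. lra.
Qed.

Lemma inv_INR_S_small e : 0 < e -> exists M, forall p, (p >= M)%nat -> / (INR p + 1) < e.
Proof.
  intros He. destruct (archimed_cor1 e He) as [N [H1 H2]]. exists N. intros p Hp.
  assert (0 < INR N) by (apply lt_0_INR; auto).
  assert (INR N <= INR p) by (apply le_INR; auto).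
  eapply Rle_lt_trans; [|apply H1]. apply Rinv_le_contravar; lra.
Qed.

Definition quad_form (m : nat) (c : nat -> R) (A : nat -> nat -> R) : R :=
  rsum m (fun i => rsum m (fun j => c i * c j * A i j)).

Definition psd_matrix m A := forall c, 0 <= quad_form m c A.
Definition sym_matrix m (A : nat -> nat -> R) :=
  forall i j, (i < m)%nat -> (j < m)%nat -> A i j = A j i.

Lemma quad_form_S m c A : quad_form (S m) c A = quad_form m c A
  + rsum m (fun i => c i * c m * A i m) + rsum m (fun j => c m * c j * A m j) + c m * c m * A m m.
Proof. unfold quad_form. simpl. rewrite rsum_plus. lra. Qed.

Lemma quad_form_ext m c c' A A' : (forall i, (i < m)%nat -> c i = c' i) ->
  (forall i j, (i < m)%nat -> (j < m)%nat -> A i j = A' i j) -> quad_form m c A = quad_form m c' A'.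
Proof.
  intros H1 H2. unfold quad_form.
  apply rsum_ext; intros i Hi. apply rsum_ext; intros j Hj. rewrite H1, H1, H2 by auto. auto.
Qed.

Lemma quad_form_plus m c A B :
  quad_form m c (fun i j => A i j + B i j) = quad_form m c A + quad_form m c B.
Proof.
  unfold quad_form. rewrite <- rsum_plus. apply rsum_ext; intros.
  rewrite <- rsum_plus. apply rsum_ext; intros. lra.
Qed.

Lemma quad_form_minus m c A B :
  quad_form m c (fun i j => A i j - B i j) = quad_form m c A - quad_form m c B.
Proof.
  unfold quad_form. rewrite <- rsum_minus. apply rsum_ext; intros.
  rewrite <- rsum_minus. apply rsum_ext; intros. lra.
Qed.

Lemma quad_form_scal m c r A : quad_form m c (fun i j => r * A i j) = r * quad_form m c A.
Proof.
  unfold quad_form. rewrite <- rsum_scal. apply rsum_ext; intros.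
  rewrite <- rsum_scal. apply rsum_ext; intros. lra.
Qed.

Lemma quad_form_rank1 m c (v : nat -> R) :
  quad_form m c (fun i j => v i * v j) = (rsum m (fun i => c i * v i)) ^ 2.
Proof.
  unfold quad_form. simpl. rewrite Rmult_1_r, <- rsum_scalr. apply rsum_ext; intros.
  rewrite <- rsum_scal. apply rsum_ext; intros. lra.
Qed.

Lemma quad_form_rsum m c p (F : nat -> nat -> nat -> R) :
  quad_form m c (fun i j => rsum p (fun t => F t i j)) = rsum p (fun t => quad_form m c (F t)).
Proof.
  unfold quad_form.
  transitivity (rsum m (fun i => rsum p (fun t => rsum m (fun j => c i * c j * F t i j)))).
  - apply rsum_ext; intros i _.
    rewrite <- (rsum_comm m p (fun j t => c i * c j * F t i j)). apply rsum_ext; intros j _.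
    rewrite <- rsum_scal. auto.
  - apply rsum_comm.
Qed.

Lemma cv_quad_form m c (A : nat -> nat -> nat -> R) Ainf :
  (forall i j, (i < m)%nat -> (j < m)%nat -> Un_cv (fun p => A p i j) (Ainf i j)) ->
  Un_cv (fun p => quad_form m c (A p)) (quad_form m c Ainf).
Proof.
  intros H. apply (cv_rsum m (fun p i => rsum m (fun j => c i * c j * A p i j))).
  intros i Hi. apply (cv_rsum m (fun p j => c i * c j * A p i j)). intros j Hj.
  apply CV_mult; [apply cv_const | auto].
Qed.

Lemma quad_form_add_coef m c e A : quad_form m (fun i => c i + e i) A = quad_form m c A
  + rsum m (fun i => rsum m (fun j => c i * e j * A i j))
  + rsum m (fun i => rsum m (fun j => e i * c j * A i j)) + quad_form m e A.
Proof.
  unfold quad_form. rewrite <- !rsum_plus. apply rsum_ext; intros.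
  rewrite <- !rsum_plus. apply rsum_ext; intros. lra.
Qed.

Lemma quad_form_shift m c A k u : (k < m)%nat -> sym_matrix m A ->
  quad_form m (fun i => c i + (if Nat.eqb i k then u else 0)) A =
  quad_form m c A + 2 * u * rsum m (fun i => c i * A i k) + u * u * A k k.
Proof.
  intros Hk Hs. set (e := fun i => if Nat.eqb i k then u else 0).
  change (quad_form m (fun i => c i + e i) A =
          quad_form m c A + 2 * u * rsum m (fun i => c i * A i k) + u * u * A k k).
  rewrite quad_form_add_coef.
  assert (E1 : rsum m (fun i => rsum m (fun j => c i * e j * A i j)) = u * rsum m (fun i => c i * A i k)).
  { rewrite <- rsum_scal. apply rsum_ext; intros i Hi.
    rewrite (rsum_ext m _ (fun j => e j * (c i * A i j))) by (intros; lra).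
    unfold e. rewrite rsum_delta by auto. lra. }
  assert (E2 : rsum m (fun i => rsum m (fun j => e i * c j * A i j)) = u * rsum m (fun i => c i * A i k)).
  { rewrite (rsum_ext m _ (fun i => e i * rsum m (fun j => c j * A i j))).
    - unfold e. rewrite rsum_delta by auto. f_equal. apply rsum_ext; intros. rewrite Hs; auto.
    - intros i Hi. rewrite <- rsum_scal. apply rsum_ext; intros; lra. }
  assert (E3 : quad_form m e A = u * u * A k k).
  { unfold quad_form. rewrite (rsum_ext m _ (fun i => e i * rsum m (fun j => e j * A i j))).
    - unfold e. rewrite !rsum_delta by auto. lra.
    - intros i Hi. rewrite <- rsum_scal. apply rsum_ext; intros; lra. }
  rewrite E1, E2, E3. lra.
Qed.

Lemma psd_matrix_diag m A k : psd_matrix m A -> (k < m)%nat -> 0 <= A k k.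
Proof.
  intros H Hk. pose proof (H (fun i => if Nat.eqb i k then 1 else 0)) as H1. unfold quad_form in H1.
  rewrite (rsum_ext m _ (fun i => (if Nat.eqb i k then 1 else 0)
             * rsum m (fun j => (if Nat.eqb j k then 1 else 0) * A i j))) in H1.
  - rewrite !rsum_delta in H1 by auto. lra.
  - intros i Hi. rewrite <- rsum_scal. apply rsum_ext; intros; lra.
Qed.

Lemma psd_matrix_restrict m A : psd_matrix (S m) A -> psd_matrix m A.
Proof.
  intros H c. pose proof (H (fun i => if Nat.eqb i m then 0 else c i)) as H0.
  rewrite quad_form_S, Nat.eqb_refl in H0.
  rewrite (rsum_ext m (fun i => _ * 0 * A i m) (fun _ => 0)) in H0 by (intros; lra).
  rewrite (rsum_ext m (fun j => 0 * _ * A m j) (fun _ => 0)) in H0 by (intros; lra).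
  rewrite rsum_0 in H0.
  rewrite (quad_form_ext m _ c A A) in H0; [lra | | auto].
  intros i Hi. destruct (Nat.eqb_spec i m); [lia | auto].
Qed.

(* A row through a vanishing diagonal entry of a psd matrix vanishes: otherwise shifting
   the coefficient vector along [k] makes the quadratic form negative. *)
Lemma psd_matrix_diag0_row m A k : psd_matrix m A -> sym_matrix m A -> (k < m)%nat ->
  A k k = 0 -> forall i, (i < m)%nat -> A i k = 0.
Proof.
  intros HA Hs Hk H0.
  assert (Hrow : forall c, rsum m (fun j => c j * A j k) = 0).
  { intros c. set (s := rsum m (fun j => c j * A j k)).
    destruct (Req_dec_T s 0) as [|Hs0]; auto. exfalso.
    set (u := - (quad_form m c A + 1) / (2 * s)).
    pose proof (HA (fun i => c i + (if Nat.eqb i k then u else 0))) as Hu.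
    rewrite quad_form_shift in Hu by auto. fold s in Hu. rewrite H0 in Hu.
    replace (2 * u * s) with (- (quad_form m c A + 1)) in Hu by (unfold u; field; auto). lra. }
  intros i Hi. pose proof (Hrow (fun j => if Nat.eqb j i then 1 else 0)) as H1.
  cbv beta in H1. rewrite rsum_delta in H1 by auto. lra.
Qed.

Definition pivot_inv (a : R) : R := if Req_dec_T a 0 then 0 else / a.

Definition pivot_reduce (A : nat -> nat -> R) (k : nat) : nat -> nat -> R :=
  fun i j => A i j - pivot_inv (A k k) * (A i k * A j k).

Lemma pivot_inv_nonneg a : 0 <= a -> 0 <= pivot_inv a.
Proof. intros H. unfold pivot_inv. destruct (Req_dec_T a 0); [lra|]. apply Rlt_le, Rinv_0_lt_compat; lra. Qed.

Lemma pivot_reduce_col m A k i : psd_matrix m A -> sym_matrix m A -> (k < m)%nat -> (i < m)%nat ->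
  pivot_reduce A k i k = 0.
Proof.
  intros HA Hs Hk Hi. unfold pivot_reduce, pivot_inv.
  destruct (Req_dec_T (A k k) 0) as [E|E].
  - rewrite (psd_matrix_diag0_row m A k) by auto. ring.
  - field. auto.
Qed.

Lemma pivot_reduce_psd m A k : psd_matrix m A -> sym_matrix m A -> (k < m)%nat ->
  psd_matrix m (pivot_reduce A k).
Proof.
  intros HA Hs Hk c. unfold pivot_reduce.
  rewrite quad_form_minus, quad_form_scal, quad_form_rank1.
  set (s := rsum m (fun i => c i * A i k)). unfold pivot_inv.
  destruct (Req_dec_T (A k k) 0); [pose proof (HA c); lra|].
  pose proof (HA (fun i => c i + (if Nat.eqb i k then - s / A k k else 0))) as H0.
  rewrite quad_form_shift in H0 by auto. fold s in H0.
  replace (quad_form m c A - / A k k * s ^ 2)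
    with (quad_form m c A + 2 * (- s / A k k) * s + - s / A k k * (- s / A k k) * A k k)
    by (field; auto).
  lra.
Qed.

Theorem schur_product_psd m : forall A B, sym_matrix m A -> psd_matrix m A -> psd_matrix m B ->
  psd_matrix m (fun i j => A i j * B i j).
Proof.
  induction m as [|m IH]; intros A B Hs HA HB c; [unfold quad_form; simpl; lra|].
  set (A' := pivot_reduce A m). set (r := pivot_inv (A m m)).
  assert (Hr : 0 <= r) by (apply pivot_inv_nonneg, (psd_matrix_diag (S m)); auto).
  assert (Hcol : forall i, (i < S m)%nat -> A' i m = 0)
    by (intros; apply (pivot_reduce_col (S m)); auto).
  assert (HsA' : sym_matrix (S m) A') by (intros i j Hi Hj; unfold A', pivot_reduce; rewrite Hs by auto; lra).
  assert (HA' : psd_matrix (S m) A') by (apply pivot_reduce_psd; auto).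
  replace (quad_form (S m) c (fun i j => A i j * B i j))
    with (quad_form (S m) c (fun i j => A' i j * B i j) + r * quad_form (S m) (fun i => c i * A i m) B).
  2:{ unfold quad_form. rewrite <- rsum_scal, <- rsum_plus. apply rsum_ext; intros.
      rewrite <- rsum_scal, <- rsum_plus. apply rsum_ext; intros. unfold A', pivot_reduce. fold r. ring. }
  assert (0 <= r * quad_form (S m) (fun i => c i * A i m) B) by (apply Rmult_le_pos; auto).
  enough (0 <= quad_form (S m) c (fun i j => A' i j * B i j)) by lra.
  rewrite quad_form_S.
  rewrite (rsum_ext m (fun i => c i * c m * (A' i m * B i m)) (fun _ => 0))
    by (intros; rewrite Hcol by lia; lra).
  rewrite (rsum_ext m (fun j => c m * c j * (A' m j * B m j)) (fun _ => 0))
    by (intros; rewrite HsA', Hcol by lia; lra).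
  rewrite Hcol, !rsum_0 by lia.
  enough (0 <= quad_form m c (fun i j => A' i j * B i j)) by lra.
  apply IH; [intros i j Hi Hj; apply HsA'; lia | apply psd_matrix_restrict; auto ..].
Qed.

Lemma psd_kernel_intro S K : (forall x y, S x -> S y -> K x y = K y x) ->
  (forall m c x, (forall i, (i < m)%nat -> S (x i)) -> 0 <= quad_form m c (fun i j => K (x i) (x j))) ->
  psd_kernel S K.
Proof. intros H1 H2. split; [exact H1 | exact H2]. Qed.

Lemma psd_kernel_sym S K x y : psd_kernel S K -> S x -> S y -> K x y = K y x.
Proof. intros [H _]; auto. Qed.

Lemma psd_kernel_quad_form S K m c x : psd_kernel S K -> (forall i, (i < m)%nat -> S (x i)) ->
  0 <= quad_form m c (fun i j => K (x i) (x j)).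
Proof. intros [_ H] Hx. exact (H m c x Hx). Qed.

Definition rank1 (h : Pt -> R) : kernel := fun x y => h x * h y.

Definition kernel_le S (A B : kernel) := psd_kernel S (fun x y => B x y - A x y).

Section PsdKernels.
Variable S : Pt -> Prop.

Lemma psd_kernel_ext K K' : (forall x y, S x -> S y -> K x y = K' x y) -> psd_kernel S K -> psd_kernel S K'.
Proof.
  intros E HK. apply psd_kernel_intro.
  - intros; rewrite <- !E by auto. apply (psd_kernel_sym S); auto.
  - intros m c x Hx. rewrite (quad_form_ext m c c _ (fun i j => K (x i) (x j))).
    + apply (psd_kernel_quad_form S); auto.
    + auto.
    + intros; rewrite E; auto.
Qed.

Lemma psd_kernel_add A B : psd_kernel S A -> psd_kernel S B -> psd_kernel S (fun x y => A x y + B x y).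
Proof.
  intros HA HB. apply psd_kernel_intro.
  - intros. rewrite (psd_kernel_sym S A), (psd_kernel_sym S B); auto.
  - intros m c x Hx. rewrite (quad_form_plus m c (fun i j => A (x i) (x j)) (fun i j => B (x i) (x j))).
    pose proof (psd_kernel_quad_form S A m c x HA Hx). pose proof (psd_kernel_quad_form S B m c x HB Hx). lra.
Qed.

Lemma psd_kernel_scale r A : 0 <= r -> psd_kernel S A -> psd_kernel S (fun x y => r * A x y).
Proof.
  intros Hr HA. apply psd_kernel_intro.
  - intros. rewrite (psd_kernel_sym S A); auto.
  - intros m c x Hx. rewrite (quad_form_scal m c r (fun i j => A (x i) (x j))).
    apply Rmult_le_pos; auto. apply (psd_kernel_quad_form S); auto.
Qed.

Lemma psd_kernel_rank1 h : psd_kernel S (rank1 h).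
Proof.
  apply psd_kernel_intro; unfold rank1.
  - intros; lra.
  - intros m c x Hx. rewrite (quad_form_rank1 m c (fun i => h (x i))). apply pow2_ge_0.
Qed.

Lemma psd_kernel_const r : 0 <= r -> psd_kernel S (fun _ _ => r).
Proof.
  intros Hr. apply (psd_kernel_ext (fun x y => r * rank1 (fun _ => 1) x y)).
  - intros; unfold rank1; lra.
  - apply psd_kernel_scale, psd_kernel_rank1; auto.
Qed.

Lemma psd_kernel_mul A B : psd_kernel S A -> psd_kernel S B -> psd_kernel S (fun x y => A x y * B x y).
Proof.
  intros HA HB. apply psd_kernel_intro.
  - intros. rewrite (psd_kernel_sym S A), (psd_kernel_sym S B); auto.
  - intros m c x Hx. apply (schur_product_psd m (fun i j => A (x i) (x j)) (fun i j => B (x i) (x j))).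
    + intros i j Hi Hj; apply (psd_kernel_sym S); auto.
    + intros c0; apply (psd_kernel_quad_form S); auto.
    + intros c0; apply (psd_kernel_quad_form S); auto.
Qed.

Lemma psd_kernel_rsum p F : (forall t, (t < p)%nat -> psd_kernel S (F t)) ->
  psd_kernel S (fun x y => rsum p (fun t => F t x y)).
Proof.
  induction p; intros H; simpl.
  - apply psd_kernel_const; lra.
  - apply psd_kernel_add; [apply IHp; intros |]; apply H; lia.
Qed.

Lemma psd_kernel_pow K t : psd_kernel S K -> psd_kernel S (fun x y => K x y ^ t).
Proof.
  intros H. induction t; simpl.
  - apply psd_kernel_const; lra.
  - apply psd_kernel_mul; auto.
Qed.

Lemma kernel_le_refl A : (forall x y, S x -> S y -> A x y = A y x) -> kernel_le S A A.
Proof. intros H. apply (psd_kernel_ext (fun _ _ => 0)); [intros; lra | apply psd_kernel_const; lra]. Qed.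

Lemma kernel_le_refl_psd A : psd_kernel S A -> kernel_le S A A.
Proof. intros H. apply kernel_le_refl. intros; apply (psd_kernel_sym S A); auto. Qed.

Lemma kernel_le_trans A B C : kernel_le S A B -> kernel_le S B C -> kernel_le S A C.
Proof.
  intros H1 H2. apply (psd_kernel_ext (fun x y => (B x y - A x y) + (C x y - B x y))).
  - intros; lra.
  - apply psd_kernel_add; auto.
Qed.

Lemma kernel_le_add A B A' B' : kernel_le S A A' -> kernel_le S B B' ->
  kernel_le S (fun x y => A x y + B x y) (fun x y => A' x y + B' x y).
Proof.
  intros H1 H2. apply (psd_kernel_ext (fun x y => (A' x y - A x y) + (B' x y - B x y))).
  - intros; lra.
  - apply psd_kernel_add; auto.
Qed.

Lemma kernel_le_scale r A B : 0 <= r -> kernel_le S A B ->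
  kernel_le S (fun x y => r * A x y) (fun x y => r * B x y).
Proof.
  intros Hr H. apply (psd_kernel_ext (fun x y => r * (B x y - A x y))).
  - intros; lra.
  - apply psd_kernel_scale; auto.
Qed.

Lemma psd_kernel_le A B : psd_kernel S A -> kernel_le S A B -> psd_kernel S B.
Proof.
  intros H1 H2. apply (psd_kernel_ext (fun x y => A x y + (B x y - A x y))).
  - intros; lra.
  - apply psd_kernel_add; auto.
Qed.

Lemma kernel_le_ext A B A' B' : (forall x y, S x -> S y -> A x y = A' x y) ->
  (forall x y, S x -> S y -> B x y = B' x y) -> kernel_le S A B -> kernel_le S A' B'.
Proof.
  intros E1 E2 H. apply (psd_kernel_ext (fun x y => B x y - A x y)); auto.
  intros; rewrite E1, E2; auto.
Qed.

Lemma kernel_le_mul A B A' B' : psd_kernel S A -> kernel_le S A A' -> psd_kernel S B -> kernel_le S B B' ->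
  kernel_le S (fun x y => A x y * B x y) (fun x y => A' x y * B' x y).
Proof.
  intros HA HAA HB HBB. assert (HB' : psd_kernel S B') by (apply (psd_kernel_le B B'); auto).
  apply (psd_kernel_ext (fun x y => (A' x y - A x y) * B' x y + A x y * (B' x y - B x y))).
  - intros; ring.
  - apply psd_kernel_add; apply psd_kernel_mul; auto.
Qed.

Lemma kernel_le_pow A B t : psd_kernel S A -> kernel_le S A B ->
  kernel_le S (fun x y => A x y ^ t) (fun x y => B x y ^ t).
Proof.
  intros HA HAB. induction t; simpl.
  - apply kernel_le_refl. auto.
  - apply kernel_le_mul; auto. apply psd_kernel_pow; auto.
Qed.

End PsdKernels.

Lemma cauchy_schwarz_rsum M u v w : (forall t, 0 <= v t) -> (forall t, 0 <= w t) ->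
  (forall t, u t ^ 2 <= v t * w t) -> rsum M u ^ 2 <= rsum M v * rsum M w.
Proof.
  intros Hv Hw Huvw. induction M; simpl; [lra|].
  assert (HA : 0 <= rsum M v) by (apply rsum_nonneg; auto).
  assert (HB : 0 <= rsum M w) by (apply rsum_nonneg; auto).
  specialize (Hv M); specialize (Hw M); specialize (Huvw M).
  set (A := rsum M v) in *; set (B := rsum M w) in *; set (C := rsum M u) in *.
  assert (Hcross : 2 * C * u M <= A * w M + v M * B).
  { destruct (Rle_dec (2 * C * u M) (A * w M + v M * B)) as [|Hlt]; auto. exfalso.
    assert (4 * C ^ 2 * u M ^ 2 <= 4 * (A * B) * (v M * w M))
      by (apply Rmult_le_compat; nra).
    assert (0 <= A * w M + v M * B) by nra.
    assert ((A * w M + v M * B) ^ 2 = 4 * (A * B) * (v M * w M) + (A * w M - v M * B) ^ 2) by ring.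
    pose proof (pow2_ge_0 (A * w M - v M * B)).
    assert (Hlt' : A * w M + v M * B < 2 * C * u M) by lra.
    assert (0 < (2 * C * u M - (A * w M + v M * B)) * (2 * C * u M + (A * w M + v M * B)))
      by (apply Rmult_lt_0_compat; lra).
    nra. }
  nra.
Qed.

Section NonnegSeries.
Variables (a : nat -> R) (f : R -> R).
Hypothesis a_nonneg : forall t, 0 <= a t.
Hypothesis f_series : forall x, infinite_sum (fun t => a t * x ^ t) (f x).

Lemma series_cv x : Un_cv (fun M => rsum M (fun t => a t * x ^ t)) (f x).
Proof. apply infinite_sum_cv; auto. Qed.

Lemma partial_series_le x M : 0 <= x -> rsum M (fun t => a t * x ^ t) <= f x.
Proof.
  intros Hx. apply (cv_ge_eventually _ _ _ M (series_cv x)). intros p Hp.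
  apply rsum_le_length; auto. intros; apply Rmult_le_pos; auto. apply pow_le; auto.
Qed.

Lemma series_nonneg x : 0 <= x -> 0 <= f x.
Proof. intros Hx. exact (partial_series_le x 0 Hx). Qed.

Lemma Rabs_series_le x : Rabs (f x) <= f (Rabs x).
Proof.
  apply (Rabs_le_of_cv _ _ _ (series_cv x)). intros M.
  eapply Rle_trans; [apply Rabs_rsum_le|]. eapply Rle_trans; [|apply (partial_series_le _ M (Rabs_pos x))].
  apply rsum_le; intros. rewrite Rabs_mult, RPow_abs, (Rabs_right (a i)); [lra | apply Rle_ge; auto].
Qed.

Lemma series_mono x y : 0 <= x -> x <= y -> f x <= f y.
Proof.
  intros H1 H2. apply (cv_le _ _ _ (series_cv x)). intros p.
  eapply Rle_trans; [|apply (partial_series_le y p); lra].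
  apply rsum_le; intros. apply Rmult_le_compat_l; auto. apply pow_incr; lra.
Qed.

Lemma Rabs_pow_sub_le B x y t : 1 <= B -> Rabs x <= B -> Rabs y <= B ->
  Rabs (x ^ t - y ^ t) <= (2 * B) ^ t * Rabs (x - y).
Proof.
  intros H1 Hx Hy. induction t; simpl.
  - rewrite Rminus_diag, Rabs_R0. pose proof (Rabs_pos (x - y)); lra.
  - replace (x * x ^ t - y * y ^ t) with (x * (x ^ t - y ^ t) + y ^ t * (x - y)) by ring.
    eapply Rle_trans; [apply Rabs_triang|]. rewrite !Rabs_mult.
    assert (Hyt : Rabs (y ^ t) <= B ^ t)
      by (rewrite <- RPow_abs; apply pow_incr; split; auto; apply Rabs_pos).
    assert (HB : B ^ t <= (2 * B) ^ t) by (apply pow_incr; lra).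
    pose proof (Rabs_pos (x - y)). pose proof (Rabs_pos (x ^ t - y ^ t)).
    assert (0 <= B ^ t) by (apply pow_le; lra).
    assert (Rabs x * Rabs (x ^ t - y ^ t) <= B * ((2 * B) ^ t * Rabs (x - y)))
      by (apply Rmult_le_compat; auto; apply Rabs_pos).
    assert (Rabs (y ^ t) * Rabs (x - y) <= (2 * B) ^ t * Rabs (x - y)) by (apply Rmult_le_compat_r; lra).
    nra.
Qed.

Lemma series_lipschitz B x y : 1 <= B -> Rabs x <= B -> Rabs y <= B ->
  Rabs (f x - f y) <= f (2 * B) * Rabs (x - y).
Proof.
  intros H1 Hx Hy.
  apply (Rabs_le_of_cv (fun M => rsum M (fun t => a t * x ^ t) - rsum M (fun t => a t * y ^ t))).
  - apply CV_minus; apply series_cv.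
  - intros M. rewrite <- rsum_minus. eapply Rle_trans; [apply Rabs_rsum_le|].
    eapply Rle_trans; [|apply Rmult_le_compat_r; [apply Rabs_pos | apply (partial_series_le (2 * B) M); lra]].
    rewrite <- rsum_scalr. apply rsum_le; intros.
    replace (a i * x ^ i - a i * y ^ i) with (a i * (x ^ i - y ^ i)) by ring.
    rewrite Rabs_mult, (Rabs_right (a i)) by (apply Rle_ge; auto). rewrite Rmult_assoc.
    apply Rmult_le_compat_l; auto. apply Rabs_pow_sub_le; auto.
Qed.

Variable S : Pt -> Prop.

Lemma cv_quad_form_series K m c (x : nat -> Pt) :
  Un_cv (fun M => rsum M (fun t => a t * quad_form m c (fun i j => K (x i) (x j) ^ t)))
        (quad_form m c (fun i j => f (K (x i) (x j)))).
Proof.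
  apply (Un_cv_ext (fun M => quad_form m c (fun i j => rsum M (fun t => a t * K (x i) (x j) ^ t)))).
  - intros M. rewrite (quad_form_rsum m c M (fun t i j => a t * K (x i) (x j) ^ t)).
    apply rsum_ext; intros. rewrite <- quad_form_scal. auto.
  - apply cv_quad_form. intros; apply series_cv.
Qed.

Lemma psd_kernel_series K : psd_kernel S K -> psd_kernel S (fun x y => f (K x y)).
Proof.
  intros HK. apply psd_kernel_intro.
  - intros x y Hx Hy. rewrite (psd_kernel_sym S K); auto.
  - intros m c x Hx. apply (cv_ge _ _ _ (cv_quad_form_series K m c x)). intros p.
    apply rsum_nonneg; intros. apply Rmult_le_pos; auto.
    apply (psd_kernel_quad_form S (fun x y => K x y ^ _)); [apply psd_kernel_pow|]; auto.
Qed.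

Lemma partial_series_quad_form_le K m c x M : psd_kernel S K -> (forall i, (i < m)%nat -> S (x i)) ->
  rsum M (fun t => a t * quad_form m c (fun i j => K (x i) (x j) ^ t))
  <= quad_form m c (fun i j => f (K (x i) (x j))).
Proof.
  intros HK Hx. apply (cv_ge_eventually _ _ _ M (cv_quad_form_series K m c x)). intros p Hp.
  apply rsum_le_length; [|lia]. intros t. apply Rmult_le_pos; auto.
  apply (psd_kernel_quad_form S (fun x y => K x y ^ t)); [apply psd_kernel_pow|]; auto.
Qed.

Lemma partial_series_kernel_le K M w : psd_kernel S K -> (forall t, (t < M)%nat -> 0 <= w t <= a t) ->
  kernel_le S (fun x y => rsum M (fun t => w t * K x y ^ t)) (fun x y => f (K x y)).
Proof.
  intros HK Hw. apply psd_kernel_intro.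
  - intros x y Hx Hy. rewrite (psd_kernel_sym S K x y) by auto. auto.
  - intros m c x Hx. rewrite quad_form_minus, (quad_form_rsum m c M (fun t i j => w t * K (x i) (x j) ^ t)).
    enough (rsum M (fun t => quad_form m c (fun i j => w t * K (x i) (x j) ^ t))
            <= rsum M (fun t => a t * quad_form m c (fun i j => K (x i) (x j) ^ t))).
    { pose proof (partial_series_quad_form_le K m c x M HK Hx). lra. }
    apply rsum_le; intros t Ht. rewrite quad_form_scal. apply Rmult_le_compat_r; [|apply Hw; auto].
    apply (psd_kernel_quad_form S (fun x y => K x y ^ t)); [apply psd_kernel_pow|]; auto.
Qed.

End NonnegSeries.

(* Aronszajn's criterion for [h] to lie in the RKHS of [K]. *)
Definition dominated S (K : kernel) (h : Pt -> R) :=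
  exists c, 0 <= c /\ kernel_le S (rank1 h) (fun x y => c * K x y).

Lemma cv_series_comb m (g y : nat -> R) (b : nat -> R) (sg : R -> R) :
  (forall x, infinite_sum (fun t => b t * x ^ t) (sg x)) ->
  Un_cv (fun M => rsum M (fun t => b t * rsum m (fun i => g i * y i ^ t))) (rsum m (fun i => g i * sg (y i))).
Proof.
  intros Hsg.
  apply (Un_cv_ext (fun M => rsum m (fun i => g i * rsum M (fun t => b t * y i ^ t)))).
  - intros M. rewrite (rsum_ext M _ (fun t => rsum m (fun i => g i * y i ^ t * b t))).
    + rewrite <- rsum_comm. apply rsum_ext; intros. rewrite <- rsum_scal. apply rsum_ext; intros; ring.
    + intros; rewrite <- rsum_scal; apply rsum_ext; intros; ring.
  - apply (cv_rsum m (fun M i => g i * rsum M (fun t => b t * y i ^ t))). intros i Hi.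
    apply CV_mult; [apply cv_const | apply infinite_sum_cv; auto].
Qed.

Lemma dominated_pow_bound S K h c m g x t : 0 <= c -> kernel_le S (rank1 h) (fun x y => c * K x y) ->
  (forall i, (i < m)%nat -> S (x i)) ->
  rsum m (fun i => g i * h (x i) ^ t) ^ 2 <= c ^ t * quad_form m g (fun i j => K (x i) (x j) ^ t).
Proof.
  intros Hc Hh Hx.
  pose proof (psd_kernel_quad_form S _ m g x (kernel_le_pow S _ _ t (psd_kernel_rank1 S h) Hh) Hx) as Hp.
  cbv beta in Hp. rewrite quad_form_minus in Hp.
  rewrite (quad_form_ext m g g (fun i j => (c * K (x i) (x j)) ^ t) (fun i j => c ^ t * K (x i) (x j) ^ t))
    in Hp by (auto; intros; apply Rpow_mult_distr).
  rewrite (quad_form_ext m g g (fun i j => rank1 h (x i) (x j) ^ t) (fun i j => h (x i) ^ t * h (x j) ^ t))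
    in Hp by (auto; intros; unfold rank1; apply Rpow_mult_distr).
  rewrite quad_form_scal, quad_form_rank1 in Hp. lra.
Qed.

(* Expanding [sg = sum b_t x^t] and bounding the [t]-th term by [dominated_pow_bound],
   Cauchy-Schwarz produces the constant [f c] with [f = sum |b_t| x^t]. *)
Lemma partial_series_comb_sq_le (b : nat -> R) (f : R -> R) S K h c m g x M :
  (forall x, infinite_sum (fun t => Rabs (b t) * x ^ t) (f x)) ->
  psd_kernel S K -> 0 <= c -> kernel_le S (rank1 h) (fun x y => c * K x y) -> (forall i, (i < m)%nat -> S (x i)) ->
  rsum M (fun t => b t * rsum m (fun i => g i * h (x i) ^ t)) ^ 2
  <= f c * quad_form m g (fun i j => f (K (x i) (x j))).
Proof.
  intros Hf HK Hc Hh Hx.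
  assert (Ha : forall t, 0 <= Rabs (b t)) by (intros; apply Rabs_pos).
  set (Q := fun t => quad_form m g (fun i j => K (x i) (x j) ^ t)).
  assert (HQ : forall t, 0 <= Q t)
    by (intros; apply (psd_kernel_quad_form S (fun x y => K x y ^ _)); [apply psd_kernel_pow|]; auto).
  eapply Rle_trans.
  - apply (cauchy_schwarz_rsum M _ (fun t => Rabs (b t) * c ^ t) (fun t => Rabs (b t) * Q t)).
    + intros; apply Rmult_le_pos; auto. apply pow_le; auto.
    + intros; apply Rmult_le_pos; auto.
    + intros t. pose proof (dominated_pow_bound S K h c m g x t Hc Hh Hx) as Ht. fold (Q t) in Ht.
      replace (Rabs (b t) * c ^ t * (Rabs (b t) * Q t)) with (b t ^ 2 * (c ^ t * Q t))
        by (rewrite <- (pow2_abs (b t)); ring).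
      rewrite Rpow_mult_distr. apply Rmult_le_compat_l; auto. apply pow2_ge_0.
  - apply Rmult_le_compat.
    + apply rsum_nonneg; intros; apply Rmult_le_pos; auto. apply pow_le; auto.
    + apply rsum_nonneg; intros; apply Rmult_le_pos; auto.
    + apply (partial_series_le _ _ Ha Hf); auto.
    + apply (partial_series_quad_form_le _ _ Ha Hf S); auto.
Qed.

Lemma dominated_series_comp (b : nat -> R) (sg f : R -> R) S K h :
  (forall x, infinite_sum (fun t => b t * x ^ t) (sg x)) ->
  (forall x, infinite_sum (fun t => Rabs (b t) * x ^ t) (f x)) ->
  psd_kernel S K -> dominated S K h -> dominated S (fun x y => f (K x y)) (fun x => sg (h x)).
Proof.
  intros Hsg Hf HK [c [Hc Hh]].
  exists (f c). split; [apply (series_nonneg _ _ (fun t => Rabs_pos (b t)) Hf); auto|].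
  apply psd_kernel_intro.
  - intros x y Hx Hy. unfold rank1. rewrite (psd_kernel_sym S K x y) by auto. ring.
  - intros m g x Hx. rewrite quad_form_minus, quad_form_scal. unfold rank1.
    rewrite (quad_form_rank1 m g (fun i => sg (h (x i)))).
    enough (rsum m (fun i => g i * sg (h (x i))) ^ 2 <= f c * quad_form m g (fun i j => f (K (x i) (x j))))
      by lra.
    set (u := fun M => rsum M (fun t => b t * rsum m (fun i => g i * h (x i) ^ t))).
    apply (cv_le (fun M => u M ^ 2)); [|intros M; apply (partial_series_comb_sq_le b f S K h c); auto].
    apply (Un_cv_ext (fun M => u M * u M)); [intros; ring|].
    replace (rsum m (fun i => g i * sg (h (x i))) ^ 2)
      with (rsum m (fun i => g i * sg (h (x i))) * rsum m (fun i => g i * sg (h (x i)))) by ring.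
    apply CV_mult; apply (cv_series_comb m g (fun i => h (x i)) b sg Hsg).
Qed.

Definition splice {T} (m1 : nat) (u v : nat -> T) (i : nat) : T :=
  if Nat.ltb i m1 then u i else v (i - m1)%nat.

Lemma splice_l {T} m1 (u v : nat -> T) i : (i < m1)%nat -> splice m1 u v i = u i.
Proof. intros H; unfold splice. destruct (Nat.ltb_spec i m1); auto; lia. Qed.

Lemma splice_r {T} m1 (u v : nat -> T) i : splice m1 u v (m1 + i)%nat = v i.
Proof. unfold splice. destruct (Nat.ltb_spec (m1 + i) m1); [lia|]. f_equal; lia. Qed.

Definition combo_app (h g : combo) : combo :=
  Combo (cm h + cm g) (splice (cm h) (ca h) (ca g)) (splice (cm h) (cy h) (cy g)).
Definition combo_scale (r : R) (h : combo) : combo := Combo (cm h) (fun i => r * ca h i) (cy h).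
Definition combo_point (t : R) (x : Pt) : combo := Combo 1 (fun _ => t) (fun _ => x).

Section RKHSCriterion.
Variables (S : Pt -> Prop) (K : kernel) (f : Pt -> R).
Hypothesis K_psd : psd_kernel S K.
Hypothesis f_dominated : dominated S K f.

Definition pairing (h : combo) := rsum (cm h) (fun i => ca h i * f (cy h i)).

(* [score h = |f|^2 - |f - h|^2] in the RKHS, to be maximized over combinations. *)
Definition score (h : combo) := 2 * pairing h - bil K h h.

Lemma pairing_app h g : pairing (combo_app h g) = pairing h + pairing g.
Proof.
  unfold pairing, combo_app; simpl. rewrite rsum_app. f_equal.
  - apply rsum_ext; intros. rewrite !splice_l; auto.
  - apply rsum_ext; intros. rewrite !splice_r; auto.
Qed.

Lemma pairing_scale r h : pairing (combo_scale r h) = r * pairing h.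
Proof. unfold pairing, combo_scale; simpl. rewrite <- rsum_scal. apply rsum_ext; intros; ring. Qed.

Lemma bil_app_l h g k : bil K (combo_app h g) k = bil K h k + bil K g k.
Proof.
  unfold bil, combo_app; simpl. rewrite rsum_app. f_equal.
  - apply rsum_ext; intros. apply rsum_ext; intros. rewrite !splice_l; auto.
  - apply rsum_ext; intros. apply rsum_ext; intros. rewrite !splice_r; auto.
Qed.

Lemma bil_app_r h g k : bil K k (combo_app h g) = bil K k h + bil K k g.
Proof.
  unfold bil, combo_app; simpl. rewrite <- rsum_plus. apply rsum_ext; intros.
  rewrite rsum_app. f_equal.
  - apply rsum_ext; intros. rewrite !splice_l; auto.
  - apply rsum_ext; intros. rewrite !splice_r; auto.
Qed.

Lemma bil_scale_l r h k : bil K (combo_scale r h) k = r * bil K h k.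
Proof.
  unfold bil, combo_scale; simpl. rewrite <- rsum_scal. apply rsum_ext; intros.
  rewrite <- rsum_scal. apply rsum_ext; intros. ring.
Qed.

Lemma bil_scale_r r h k : bil K k (combo_scale r h) = r * bil K k h.
Proof.
  unfold bil, combo_scale; simpl. rewrite <- rsum_scal. apply rsum_ext; intros.
  rewrite <- rsum_scal. apply rsum_ext; intros. ring.
Qed.

Lemma bil_sym h g : combo_in S h -> combo_in S g -> bil K h g = bil K g h.
Proof.
  intros H1 H2. unfold bil. rewrite rsum_comm. apply rsum_ext; intros. apply rsum_ext; intros.
  rewrite (psd_kernel_sym S K) by auto. ring.
Qed.

Lemma bil_point_r h t x : combo_in S h -> S x -> bil K h (combo_point t x) = t * combo_eval K h x.
Proof.
  intros H1 H2. unfold bil, combo_eval, combo_point; simpl. rewrite <- rsum_scal. apply rsum_ext; intros.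
  rewrite (psd_kernel_sym S K) by auto. ring.
Qed.

Lemma combo_in_app h g : combo_in S h -> combo_in S g -> combo_in S (combo_app h g).
Proof.
  intros H1 H2 i Hi. simpl in *. destruct (Nat.ltb_spec i (cm h)).
  - rewrite splice_l; auto.
  - replace i with (cm h + (i - cm h))%nat by lia. rewrite splice_r. apply H2; lia.
Qed.

Lemma combo_in_scale r h : combo_in S h -> combo_in S (combo_scale r h).
Proof. intros H i Hi; apply H; auto. Qed.

Lemma combo_in_point t x : S x -> combo_in S (combo_point t x).
Proof. intros H i Hi; auto. Qed.

Lemma score_bounded : exists C, forall h, combo_in S h -> score h <= C.
Proof.
  destruct f_dominated as [c [Hc Hk]]. exists (c + 1). intros h Hh.
  pose proof (psd_kernel_quad_form S _ (cm h) (ca h) (cy h) Hk Hh) as H. cbv beta in H.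
  rewrite quad_form_minus, quad_form_scal in H. unfold rank1 in H.
  rewrite (quad_form_rank1 (cm h) (ca h) (fun i => f (cy h i))) in H.
  pose proof (psd_kernel_quad_form S K (cm h) (ca h) (cy h) K_psd Hh).
  unfold score, pairing. change (quad_form (cm h) (ca h) (fun i j => K (cy h i) (cy h j))) with (bil K h h) in *.
  set (L := rsum (cm h) (fun i => ca h i * f (cy h i))) in *. set (B := bil K h h) in *.
  assert (L ^ 2 <= (c + 1) * B) by nra.
  pose proof (pow2_ge_0 (L - (c + 1))).
  assert ((c + 1) * (2 * L - B) <= (c + 1) * (c + 1)) by nra.
  apply (Rmult_le_reg_l (c + 1)); lra.
Qed.

Lemma score_midpoint h g : combo_in S h -> combo_in S g ->
  score (combo_app (combo_scale (/2) h) (combo_scale (/2) g))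
  = (score h + score g) / 2 + norm2_diff K h g / 4.
Proof.
  intros Hh Hg. unfold score, norm2_diff.
  rewrite pairing_app, !pairing_scale, !bil_app_l, !bil_app_r, !bil_scale_l, !bil_scale_r.
  rewrite (bil_sym g h) by auto. field.
Qed.

Lemma score_add_point h t x : combo_in S h -> S x ->
  score (combo_app h (combo_point t x))
  = score h + 2 * t * (f x - combo_eval K h x) - t * t * K x x.
Proof.
  intros Hh Hx. unfold score.
  rewrite pairing_app, bil_app_l, !bil_app_r, (bil_sym (combo_point t x) h), bil_point_r
    by auto using combo_in_point.
  unfold pairing, bil, combo_point; simpl. ring.
Qed.

Section NearMaximizers.
Variable s : R.
Hypothesis s_ub : forall g, combo_in S g -> score g <= s.

Lemma near_max_cauchy e h g : combo_in S h -> combo_in S g -> s - e < score h -> s - e < score g ->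
  norm2_diff K h g < 4 * e.
Proof.
  intros Hh Hg H1 H2.
  pose proof (s_ub _ (combo_in_app _ _ (combo_in_scale (/2) h Hh) (combo_in_scale (/2) g Hg))).
  rewrite score_midpoint in H by auto. lra.
Qed.

(* Adding the optimal multiple [t] of [K(., x)] to a near-maximizer [h] cannot increase the
   score by more than [e], which bounds the error at [x]. *)
Lemma near_max_eval_error e h x : combo_in S h -> S x -> s - e < score h ->
  (f x - combo_eval K h x) ^ 2 <= (K x x + 1) * e.
Proof.
  intros Hh Hx He.
  assert (Hkap : 0 <= K x x).
  { pose proof (psd_kernel_quad_form S K 1 (fun _ => 1) (fun _ => x) K_psd (fun _ _ => Hx)) as H0.
    unfold quad_form in H0; simpl in H0. lra. }
  set (err := f x - combo_eval K h x). set (t := err / (K x x + 1)).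
  pose proof (s_ub _ (combo_in_app _ _ Hh (combo_in_point t x Hx))) as Hm.
  rewrite score_add_point in Hm by auto. fold err in Hm.
  assert (Hgain : 2 * t * err - t * t * K x x < e) by lra.
  replace (2 * t * err - t * t * K x x)
    with (err ^ 2 / (K x x + 1) + err ^ 2 / (K x x + 1) ^ 2) in Hgain by (unfold t; field; lra).
  assert (0 <= err ^ 2 / (K x x + 1) ^ 2)
    by (unfold Rdiv; apply Rmult_le_pos; [apply pow2_ge_0 | apply Rlt_le, Rinv_0_lt_compat, pow_lt; lra]).
  assert (err ^ 2 / (K x x + 1) < e) by lra.
  apply Rmult_lt_compat_l with (r := K x x + 1) in H0; [|lra].
  replace ((K x x + 1) * (err ^ 2 / (K x x + 1))) with (err ^ 2) in H0 by (field; lra). lra.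
Qed.

End NearMaximizers.

Lemma score_max_seq : exists s (hs : nat -> combo),
  (forall g, combo_in S g -> score g <= s) /\
  (forall p, combo_in S (hs p) /\ s - / (INR p + 1) < score (hs p)).
Proof.
  destruct score_bounded as [C HC].
  set (E := fun r => exists h, combo_in S h /\ r = score h).
  assert (HEb : bound E) by (exists C; intros r [h [Hh ->]]; auto).
  set (h0 := Combo 0 (fun _ => 0) (fun _ _ _ => 0)).
  assert (HE0 : exists r, E r) by (exists (score h0), h0; split; auto; intros i Hi; simpl in Hi; lia).
  destruct (completeness E HEb HE0) as [s [Hub Hlub]].
  assert (Hnear : forall p, exists h, combo_in S h /\ s - / (INR p + 1) < score h).
  { intros p. apply NNPP. intros Hno.
    assert (Hp : 0 < / (INR p + 1)) by (apply Rinv_0_lt_compat; pose proof (pos_INR p); lra).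
    enough (s <= s - / (INR p + 1)) by lra.
    apply Hlub. intros r [h [Hh ->]]. apply Rnot_lt_le. intros Hlt. apply Hno. exists h; auto. }
  destruct (choice _ Hnear) as [hs Hhs].
  exists s, hs. split; auto. intros g Hg. apply Hub. exists g; auto.
Qed.

Theorem dominated_in_RKHS : in_RKHS S K f.
Proof.
  destruct score_max_seq as [s [hs [Hub Hhs]]].
  exists hs. split; [intros p; apply Hhs | split].
  - intros eps Heps. destruct (inv_INR_S_small (eps / 4)) as [M HM]; [lra|].
    exists M. intros p q Hp Hq.
    destruct (Hhs p) as [Hp1 Hp2]. destruct (Hhs q) as [Hq1 Hq2].
    specialize (HM p Hp) as HMp. specialize (HM q Hq) as HMq.
    apply Rlt_le_trans with (4 * Rmax (/ (INR p + 1)) (/ (INR q + 1))).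
    + apply (near_max_cauchy s Hub); auto.
      * eapply Rle_lt_trans; [|apply Hp2]. pose proof (Rmax_l (/ (INR p + 1)) (/ (INR q + 1))). lra.
      * eapply Rle_lt_trans; [|apply Hq2]. pose proof (Rmax_r (/ (INR p + 1)) (/ (INR q + 1))). lra.
    + apply Rmax_case; lra.
  - intros x Hx eps Heps.
    set (kap := K x x + 1).
    assert (Hkap : 0 < kap).
    { unfold kap. pose proof (psd_kernel_quad_form S K 1 (fun _ => 1) (fun _ => x) K_psd (fun _ _ => Hx)) as H0.
      unfold quad_form in H0; simpl in H0. lra. }
    destruct (inv_INR_S_small (eps ^ 2 / kap)) as [M HM]; [apply Rdiv_lt_0_compat; [apply pow_lt|]; lra|].
    exists M. intros p Hp. unfold R_dist.
    destruct (Hhs p) as [Hp1 Hp2].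
    pose proof (near_max_eval_error s Hub _ (hs p) x Hp1 Hx Hp2) as Herr. fold kap in Herr.
    specialize (HM p Hp).
    apply Rmult_lt_compat_l with (r := kap) in HM; [|lra].
    replace (kap * (eps ^ 2 / kap)) with (eps ^ 2) in HM by (field; lra).
    rewrite Rabs_minus_sym, <- (Rabs_right eps) by lra. apply Rsqr_lt_abs_0. unfold Rsqr. simpl in *. lra.
Qed.

End RKHSCriterion.

Section DominatedAlgebra.
Variable S : Pt -> Prop.

Lemma dominated_ext K K' h h' : (forall x y, S x -> S y -> K x y = K' x y) ->
  (forall x, S x -> h x = h' x) -> dominated S K h -> dominated S K' h'.
Proof.
  intros E1 E2 [c [Hc H]]. exists c; split; auto. eapply kernel_le_ext; [| |apply H].
  - intros; unfold rank1; rewrite !E2; auto.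
  - intros; cbv beta; rewrite E1; auto.
Qed.

Lemma dominated_le_scale K K' h r : dominated S K h -> 0 <= r -> kernel_le S K (fun x y => r * K' x y) ->
  dominated S K' h.
Proof.
  intros [c [Hc H]] Hr Hk. exists (c * r). split; [apply Rmult_le_pos; auto|].
  eapply kernel_le_trans; [apply H|]. eapply kernel_le_ext; [| |apply (kernel_le_scale S c _ _ Hc Hk)].
  - intros; auto.
  - intros; cbv beta; ring.
Qed.

Lemma dominated_le K K' h : dominated S K h -> kernel_le S K K' -> dominated S K' h.
Proof.
  intros H Hk. apply (dominated_le_scale K K' h 1); auto; [lra|].
  eapply kernel_le_ext; [| |apply Hk]; intros; cbv beta; ring.
Qed.

Lemma dominated_add K h g : dominated S K h -> dominated S K g -> dominated S K (fun x => h x + g x).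
Proof.
  intros [c1 [Hc1 H1]] [c2 [Hc2 H2]]. exists (2 * c1 + 2 * c2). split; [lra|].
  assert (H3 : kernel_le S (rank1 (fun x => h x + g x)) (fun x y => 2 * rank1 h x y + 2 * rank1 g x y)).
  { apply (psd_kernel_ext S (rank1 (fun x => h x - g x))); [intros; unfold rank1; ring | apply psd_kernel_rank1]. }
  eapply kernel_le_trans; [apply H3|]. eapply kernel_le_ext;
    [| |apply (kernel_le_add S _ _ _ _ (kernel_le_scale S 2 _ _ ltac:(lra) H1) (kernel_le_scale S 2 _ _ ltac:(lra) H2))].
  - intros; auto.
  - intros; cbv beta; ring.
Qed.

Lemma dominated_scale K h r : dominated S K h -> dominated S K (fun x => r * h x).
Proof.
  intros [c [Hc H]]. exists (r * r * c). split; [apply Rmult_le_pos; auto; nra|].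
  eapply kernel_le_ext; [| |apply (kernel_le_scale S (r * r) _ _ ltac:(nra) H)].
  - intros; unfold rank1; ring.
  - intros; cbv beta; ring.
Qed.

Lemma dominated_0 K : (forall x y, S x -> S y -> K x y = K y x) -> dominated S K (fun _ => 0).
Proof.
  intros Hs. exists 0. split; [lra|].
  apply (psd_kernel_ext S (fun _ _ => 0)); [intros; unfold rank1; ring | apply psd_kernel_const; lra].
Qed.

Lemma dominated_rsum K m F : (forall x y, S x -> S y -> K x y = K y x) ->
  (forall i, (i < m)%nat -> dominated S K (F i)) -> dominated S K (fun x => rsum m (fun i => F i x)).
Proof.
  intros Hs. induction m; intros H; simpl; [apply dominated_0; auto|].
  apply (dominated_add K (fun x => rsum m (fun i => F i x)) (F m)); [apply IHm; intros |]; apply H; lia.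
Qed.

Lemma dominated_mul A B h g : psd_kernel S A -> psd_kernel S B -> dominated S A h -> dominated S B g ->
  dominated S (fun x y => A x y * B x y) (fun x => h x * g x).
Proof.
  intros HA HB [c1 [Hc1 H1]] [c2 [Hc2 H2]]. exists (c1 * c2). split; [apply Rmult_le_pos; auto|].
  eapply kernel_le_ext; [| |apply (kernel_le_mul S _ _ _ _ (psd_kernel_rank1 S h) H1 (psd_kernel_rank1 S g) H2)].
  - intros; unfold rank1; ring.
  - intros; cbv beta; ring.
Qed.

Lemma dominated_const r : dominated S (fun _ _ => 1) (fun _ => r).
Proof.
  exists (r * r). split; [nra|].
  apply (psd_kernel_ext S (fun _ _ => 0)); [intros; unfold rank1; ring | apply psd_kernel_const; lra].
Qed.

End DominatedAlgebra.

Definition patch_kernel (d : nat) (i : nat) : kernel := fun X Y => rsum d (fun k => X i k * Y i k).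
Definition first_kernel (d n : nat) (f : nat -> R -> R) : kernel :=
  fun X Y => rsum n (fun i => f 1%nat (patch_kernel d i X Y)).
Definition layer_kernel (d n : nat) (f : nat -> R -> R) (k : nat) : kernel :=
  fun X Y => fcomp f (k - 1) (first_kernel d n f X Y).

Lemma layer_kernel_S d n f k X Y : (1 <= k)%nat ->
  layer_kernel d n f (S k) X Y = f (S k) (layer_kernel d n f k X Y).
Proof. intros H. destruct k; [lia|]. unfold layer_kernel. simpl. rewrite Nat.sub_0_r. auto. Qed.

Section PatchKernel.
Variables (S : Pt -> Prop) (d : nat).

Lemma psd_patch_kernel i : psd_kernel S (patch_kernel d i).
Proof. apply (psd_kernel_rsum S d (fun k => rank1 (fun X => X i k))). intros; apply psd_kernel_rank1. Qed.

Lemma dominated_coord i k : (k < d)%nat -> dominated S (patch_kernel d i) (fun X => X i k).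
Proof.
  intros Hk. exists 1. split; [lra|].
  apply (psd_kernel_ext S (fun X Y => rsum d (fun k' => if Nat.eqb k' k then 0 else rank1 (fun X => X i k') X Y))).
  - intros x y _ _. unfold patch_kernel, rank1. rewrite (rsum_split_at d k (fun k0 => x i k0 * y i k0)) by auto. ring.
  - apply psd_kernel_rsum. intros t Ht. destruct (Nat.eqb t k); [apply psd_kernel_const; lra | apply psd_kernel_rank1].
Qed.

Lemma dominated_patch_linear i (w : nat -> R) :
  dominated S (patch_kernel d i) (fun X => rsum d (fun m => X i m * w m)).
Proof.
  apply dominated_rsum; [intros; apply (psd_kernel_sym S); auto; apply psd_patch_kernel|].
  intros m Hm. apply (dominated_ext S (patch_kernel d i) (patch_kernel d i) (fun X => w m * X i m)); auto.
  - intros; ring.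
  - apply dominated_scale, dominated_coord; auto.
Qed.

End PatchKernel.

Section NetworkKernel.
Variables (Sp : Pt -> Prop) (d n N : nat) (f : nat -> R -> R) (b : nat -> nat -> R) (sigma : nat -> R -> R).
Hypothesis f_series : forall i x, (1 <= i <= N)%nat ->
  infinite_sum (fun t => Rabs (b i t) * x ^ t) (f i x).
Hypothesis sigma_series : forall i x, (1 <= i <= N)%nat -> infinite_sum (fun t => b i t * x ^ t) (sigma i x).
Hypothesis N_pos : (1 <= N)%nat.

Let coef_nonneg i t : 0 <= Rabs (b i t) := Rabs_pos (b i t).

Lemma psd_first_term i : psd_kernel Sp (fun X Y => f 1%nat (patch_kernel d i X Y)).
Proof.
  apply (psd_kernel_series _ (f 1%nat) (coef_nonneg 1%nat) (fun x => f_series 1%nat x ltac:(lia))).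
  apply psd_patch_kernel.
Qed.

Lemma psd_first_kernel : psd_kernel Sp (first_kernel d n f).
Proof. apply (psd_kernel_rsum Sp n (fun i X Y => f 1%nat (patch_kernel d i X Y))). intros; apply psd_first_term. Qed.

Lemma psd_layer_kernel k : (1 <= k <= N)%nat -> psd_kernel Sp (layer_kernel d n f k).
Proof.
  induction k as [|[|k] IH]; intros Hk; [lia | |].
  - apply psd_first_kernel.
  - apply (psd_kernel_ext Sp (fun X Y => f (S (S k)) (layer_kernel d n f (S k) X Y))).
    + intros; rewrite (layer_kernel_S d n f (S k)); auto; lia.
    + apply (psd_kernel_series _ _ (coef_nonneg _) (fun x => f_series _ x Hk)). apply IH; lia.
Qed.

Lemma layer_kernel_sym k x y : (1 <= k <= N)%nat -> Sp x -> Sp y ->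
  layer_kernel d n f k x y = layer_kernel d n f k y x.
Proof. intros. apply (psd_kernel_sym Sp); auto. apply psd_layer_kernel; auto. Qed.

Lemma first_term_le_first_kernel q : (q < n)%nat ->
  kernel_le Sp (fun X Y => f 1%nat (patch_kernel d q X Y)) (first_kernel d n f).
Proof.
  intros Hq.
  apply (psd_kernel_ext Sp (fun X Y => rsum n (fun i => if Nat.eqb i q then 0 else f 1%nat (patch_kernel d i X Y)))).
  - intros x y _ _. unfold first_kernel. rewrite (rsum_split_at n q (fun i => f 1%nat (patch_kernel d i x y))) by auto.
    ring.
  - apply psd_kernel_rsum. intros t Ht. destruct (Nat.eqb t q); [apply psd_kernel_const; lra | apply psd_first_term].
Qed.

Lemma dominated_first_unit q (w : nat -> R) : (q < n)%nat ->
  dominated Sp (first_kernel d n f) (fun X => sigma 1%nat (rsum d (fun m => X q m * w m))).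
Proof.
  intros Hq. apply (dominated_le Sp (fun X Y => f 1%nat (patch_kernel d q X Y))).
  - apply (dominated_series_comp (b 1%nat)); [intros; apply sigma_series; lia | intros; apply f_series; lia | |].
    + apply psd_patch_kernel.
    + apply dominated_patch_linear.
  - apply first_term_le_first_kernel; auto.
Qed.

Lemma dominated_layer_S k h : (1 <= k)%nat -> (S k <= N)%nat -> dominated Sp (layer_kernel d n f k) h ->
  dominated Sp (layer_kernel d n f (S k)) (fun X => sigma (S k) (h X)).
Proof.
  intros H1 H2 Hh.
  apply (dominated_ext Sp (fun X Y => f (S k) (layer_kernel d n f k X Y)) _ (fun X => sigma (S k) (h X)));
    [intros; rewrite layer_kernel_S; auto | auto |].
  apply (dominated_series_comp (b (S k))); [intros; apply sigma_series; lia | intros; apply f_series; lia | |]; auto.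
  apply psd_layer_kernel; lia.
Qed.

Variables (dd nn pp : nat -> nat) (gam : nat -> nat -> nat -> R) (W : nat -> nat -> nat -> R).
Hypotheses (dd_1 : dd 1%nat = d) (pp_1 : pp 1%nat = 1%nat) (nn_1 : nn 1%nat = n).

Lemma Xs_S X k q m : Xs sigma dd nn pp gam W X (S k) q m =
  rsum (nn (S k)) (fun q' => gam (S k) (q + m / pp (S (S k)))%nat q' *
     sigma (S k) (rsum (dd (S k) * pp (S k))
       (fun m' => Xs sigma dd nn pp gam W X k q' m' * W (S k) (m mod pp (S (S k)))%nat m'))).
Proof. reflexivity. Qed.

Lemma dominated_layer_outputs k : (1 <= k <= N)%nat ->
  forall q m, dominated Sp (layer_kernel d n f k) (fun X => Xs sigma dd nn pp gam W X k q m).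
Proof.
  induction k as [|[|k] IH]; intros Hk q m; [lia | |].
  - eapply (dominated_ext Sp (first_kernel d n f)); [intros; auto | intros x _; symmetry; apply Xs_S |].
    apply dominated_rsum; [intros; apply (psd_kernel_sym Sp); auto; apply psd_first_kernel|].
    rewrite nn_1. intros q' Hq'. apply dominated_scale. rewrite dd_1, pp_1, Nat.mul_1_r.
    apply dominated_first_unit; auto.
  - eapply (dominated_ext Sp (layer_kernel d n f (S (S k)))); [intros; auto | intros x _; symmetry; apply Xs_S |].
    apply dominated_rsum; [intros; apply layer_kernel_sym; auto|].
    intros q' Hq'. apply dominated_scale. apply dominated_layer_S; [lia | lia |].
    apply dominated_rsum; [intros; apply layer_kernel_sym; auto; lia|].
    intros m' Hm'.
    apply (dominated_ext Sp (layer_kernel d n f (S k)) _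
             (fun X => W (S (S k)) (m mod pp (S (S (S k))))%nat m' * Xs sigma dd nn pp gam W X (S k) q' m'));
      [auto | intros; ring |].
    apply dominated_scale, IH. lia.
Qed.

Lemma dominated_cnn WN : dominated Sp (layer_kernel d n f N) (cnn sigma dd nn pp gam W N WN).
Proof.
  unfold cnn. apply dominated_rsum; [intros; apply layer_kernel_sym; auto; lia|].
  intros m Hm. apply (dominated_ext Sp (layer_kernel d n f N) _ (fun X => WN m * Xs sigma dd nn pp gam W X N 0%nat m));
    [auto | intros; ring |].
  apply dominated_scale, dominated_layer_outputs. lia.
Qed.

End NetworkKernel.

Definition strictly_incr (phi : nat -> nat) := forall p, (phi p < phi (S p))%nat.

Lemma strictly_incr_ge phi : strictly_incr phi -> forall p, (p <= phi p)%nat.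
Proof. intros H p. induction p; [lia|]. specialize (H p). lia. Qed.

Lemma strictly_incr_lt phi : strictly_incr phi -> forall p q, (p < q)%nat -> (phi p < phi q)%nat.
Proof.
  intros H p q Hpq. induction q; [lia|].
  destruct (Nat.eq_dec p q); [subst; auto|]. specialize (H q). specialize (IHq ltac:(lia)). lia.
Qed.

Lemma strictly_incr_comp phi psi : strictly_incr phi -> strictly_incr psi -> strictly_incr (fun p => phi (psi p)).
Proof. intros H1 H2 p. apply strictly_incr_lt; auto. Qed.

Lemma cv_subseq u l phi : Un_cv u l -> strictly_incr phi -> Un_cv (fun p => u (phi p)) l.
Proof.
  intros H Hp e He. destruct (H e He) as [N HN]. exists N. intros p Hpn. apply HN.
  pose proof (strictly_incr_ge phi Hp p). lia.
Qed.

Lemma ValAdh_subseq v l : ValAdh v l -> exists psi, strictly_incr psi /\ Un_cv (fun p => v (psi p)) l.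
Proof.
  intros H.
  assert (Hex : forall N k, exists p, (N <= p)%nat /\ Rabs (v p - l) < / (INR k + 1)).
  { intros N k. assert (Hk : 0 < / (INR k + 1)) by (apply Rinv_0_lt_compat; pose proof (pos_INR k); lra).
    destruct (H (disc l (mkposreal _ Hk)) N) as [p [Hp1 Hp2]].
    - exists (mkposreal _ Hk). intros y Hy; auto.
    - exists p; split; auto. }
  destruct (choice (fun (Nk : nat * nat) p => (fst Nk <= p)%nat /\ Rabs (v p - l) < / (INR (snd Nk) + 1)))
    as [F HF]; [intros [N k]; apply Hex|].
  set (psi := fix psi p := match p with O => F (O, O) | S p' => F (S (psi p'), S p') end).
  exists psi. split.
  - intros p. simpl. destruct (HF (S (psi p), S p)). simpl in *. lia.
  - intros e He. destruct (inv_INR_S_small e He) as [M HM]. exists M. intros p Hp. unfold R_dist.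
    eapply Rlt_trans; [|apply (HM p Hp)]. destruct p; apply (HF (_, _)).
Qed.

Lemma common_convergent_subseq {A} (L : list A) (v : A -> nat -> R) :
  (forall a p, In a L -> -1 <= v a p <= 1) ->
  exists phi, strictly_incr phi /\ forall a, In a L -> exists l, Un_cv (fun p => v a (phi p)) l.
Proof.
  induction L as [|a0 L IH]; intros Hb.
  - exists (fun p => p). split; [intros p; lia | intros a []].
  - destruct IH as [phi [Hphi Hc]]; [intros; apply Hb; right; auto|].
    destruct (Bolzano_Weierstrass (fun p => v a0 (phi p)) (fun c => -1 <= c <= 1) (compact_P3 (-1) 1)) as [l Hl].
    { intros p. apply Hb. left; auto. }
    destruct (ValAdh_subseq _ _ Hl) as [psi [Hpsi Hcv]].
    exists (fun p => phi (psi p)). split; [apply strictly_incr_comp; auto|].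
    intros a [<-|Hin]; [exists l; auto|].
    destruct (Hc a Hin) as [l' Hl']. exists l'. apply (cv_subseq (fun p => v a (phi p))); auto.
Qed.

Lemma eventually_forall_lt m (P : nat -> nat -> Prop) :
  (forall i, (i < m)%nat -> exists N, forall p, (p >= N)%nat -> P i p) ->
  exists N, forall p, (p >= N)%nat -> forall i, (i < m)%nat -> P i p.
Proof.
  induction m; intros H; [exists O; intros; lia|].
  destruct IHm as [N1 H1]; [intros; apply H; lia|]. destruct (H m ltac:(lia)) as [N2 H2].
  exists (max N1 N2). intros p Hp i Hi. destruct (Nat.eq_dec i m); [subst; apply H2 | apply H1]; lia.
Qed.

Section SphereProduct.
Variables (d n : nat).
Let Sp := inI d n.

(* Equivalent to [dist] up to constants, and easier to work with coordinatewise. *)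
Definition sup_close (del : R) (x y : Pt) :=
  forall i k, (i < n)%nat -> (k < d)%nat -> Rabs (x i k - y i k) < del.

Lemma sup_close_sym del x y : sup_close del x y -> sup_close del y x.
Proof. intros H i k Hi Hk. rewrite Rabs_minus_sym; auto. Qed.

Lemma sup_close_trans a b x y z : sup_close a x y -> sup_close b y z -> sup_close (a + b) x z.
Proof.
  intros H1 H2 i k Hi Hk. replace (x i k - z i k) with ((x i k - y i k) + (y i k - z i k)) by ring.
  eapply Rle_lt_trans; [apply Rabs_triang|]. specialize (H1 i k Hi Hk). specialize (H2 i k Hi Hk). lra.
Qed.

Lemma sup_close_mono a b x y : a <= b -> sup_close a x y -> sup_close b x y.
Proof. intros H1 H2 i k Hi Hk. specialize (H2 i k Hi Hk). lra. Qed.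

Lemma coord_bound x i k : Sp x -> (i < n)%nat -> (k < d)%nat -> Rabs (x i k) <= 1.
Proof.
  intros Hx Hi Hk.
  assert (x i k ^ 2 <= 1).
  { rewrite <- (Hx i Hi). apply (rsum_term_le d k (fun k0 => x i k0 ^ 2)); auto. intros; apply pow2_ge_0. }
  apply Rabs_le. nra.
Qed.

Lemma sup_close_of_dist del x y : Defs.dist d n x y < del -> sup_close del x y.
Proof.
  intros H i k Hi Hk. unfold dist in H.
  set (T := rsum n (fun i0 => rsum d (fun k0 => (x i0 k0 - y i0 k0) ^ 2))) in *.
  assert (Ht : (x i k - y i k) ^ 2 <= T).
  { unfold T. eapply Rle_trans; [|apply (rsum_term_le n i (fun i0 => rsum d (fun k0 => (x i0 k0 - y i0 k0) ^ 2)))].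
    - apply (rsum_term_le d k (fun k0 => (x i k0 - y i k0) ^ 2)); auto. intros; apply pow2_ge_0.
    - intros; apply rsum_nonneg; intros; apply pow2_ge_0.
    - auto. }
  rewrite <- sqrt_Rsqr_abs. eapply Rle_lt_trans; [|apply H]. apply sqrt_le_1; [apply Rle_0_sqr | |].
  - eapply Rle_trans; [|apply Ht]. apply pow2_ge_0.
  - unfold Rsqr. replace ((x i k - y i k) * (x i k - y i k)) with ((x i k - y i k) ^ 2) by ring. exact Ht.
Qed.

Lemma dist_le_of_sup_close del x y : 0 < del -> sup_close del x y ->
  Defs.dist d n x y <= (INR n * INR d + 1) * del.
Proof.
  intros Hd H. unfold dist.
  assert (HT : rsum n (fun i0 => rsum d (fun k0 => (x i0 k0 - y i0 k0) ^ 2)) <= INR n * (INR d * del ^ 2)).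
  { rewrite <- (rsum_const n), <- (rsum_const d). apply rsum_le; intros i Hi; apply rsum_le; intros k Hk.
    rewrite <- (pow2_abs (x i k - y i k)). specialize (H i k Hi Hk). pose proof (Rabs_pos (x i k - y i k)). nra. }
  assert (0 <= INR n * INR d) by (apply Rmult_le_pos; apply pos_INR).
  rewrite <- (sqrt_pow2 ((INR n * INR d + 1) * del)) by nra.
  apply sqrt_le_1; [apply rsum_nonneg; intros; apply rsum_nonneg; intros; apply pow2_ge_0 | nra |].
  eapply Rle_trans; [apply HT | nra].
Qed.

Lemma inI_seq_compact (u : nat -> Pt) : (forall p, Sp (u p)) ->
  exists phi, strictly_incr phi /\
    exists x, Sp x /\ forall del, del > 0 -> exists P, forall p, (p >= P)%nat -> sup_close del (u (phi p)) x.
Proof.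
  intros Hu.
  destruct (common_convergent_subseq (list_prod (seq 0 n) (seq 0 d)) (fun ik p => u p (fst ik) (snd ik)))
    as [phi [Hphi Hc]].
  { intros [i k] p Hin. apply in_prod_iff in Hin. destruct Hin as [H1 H2].
    apply in_seq in H1; apply in_seq in H2. apply Rabs_le_between, coord_bound; auto; simpl; lia. }
  assert (Hc2 : forall i k, exists l, (i < n)%nat -> (k < d)%nat -> Un_cv (fun p => u (phi p) i k) l).
  { intros i k. destruct (classic ((i < n)%nat /\ (k < d)%nat)) as [[Hi Hk]|Hn].
    - destruct (Hc (i, k)) as [l Hl]; [apply in_prod_iff; split; apply in_seq; lia|]. exists l; auto.
    - exists 0. intros; exfalso; auto. }
  destruct (choice (fun ik l => (fst ik < n)%nat -> (snd ik < d)%nat -> Un_cv (fun p => u (phi p) (fst ik) (snd ik)) l))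
    as [lim Hlim]; [intros [i k]; apply Hc2|].
  set (x := fun i k => lim (i, k)).
  assert (Hx : forall i k, (i < n)%nat -> (k < d)%nat -> Un_cv (fun p => u (phi p) i k) (x i k))
    by (intros i k; apply (Hlim (i, k))).
  exists phi. split; auto. exists x. split.
  - intros i Hi. apply (UL_sequence (fun p => rsum d (fun k => u (phi p) i k ^ 2))).
    + apply (cv_rsum d (fun p k => u (phi p) i k ^ 2)). intros k Hk. apply CV_mult; [apply Hx; auto|].
      apply (Un_cv_ext (fun p => u (phi p) i k * 1)); [intros; ring|]. apply CV_mult; [apply Hx; auto | apply cv_const].
    + apply (Un_cv_ext (fun _ => 1)); [intros p; symmetry; apply (Hu (phi p)); auto | apply cv_const].
  - intros del Hdel.
    destruct (eventually_forall_lt n (fun i p => forall k, (k < d)%nat -> Rabs (u (phi p) i k - x i k) < del))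
      as [P HP].
    { intros i Hi. apply (eventually_forall_lt d (fun k p => Rabs (u (phi p) i k - x i k) < del)). intros k Hk.
      destruct (Hx i k Hi Hk del Hdel) as [P HP]. exists P. intros p Hp. apply HP; auto. }
    exists P. intros p Hp i k Hi Hk. apply HP; auto.
Qed.

Lemma lebesgue_number (P : Pt -> Pt -> Prop) :
  (forall y, Sp y -> exists del, del > 0 /\ forall z, Sp z -> sup_close del y z -> P y z) ->
  exists del, del > 0 /\ forall z, Sp z -> exists y, Sp y /\ forall w, Sp w -> sup_close del z w -> P y w.
Proof.
  intros HP. apply NNPP. intros Hn.
  assert (Hbad : forall p : nat, exists z, Sp z /\
            forall y, Sp y -> exists w, Sp w /\ sup_close (/ (INR p + 1)) z w /\ ~ P y w).
  { intros p. apply NNPP. intros Hc. apply Hn. exists (/ (INR p + 1)).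
    split; [apply Rinv_0_lt_compat; pose proof (pos_INR p); lra|].
    intros z Hz. apply NNPP. intros Hc2. apply Hc. exists z. split; auto.
    intros y Hy. apply NNPP. intros Hc3. apply Hc2. exists y. split; auto.
    intros w Hw Hcl. apply NNPP. intros Hc4. apply Hc3. exists w. auto. }
  destruct (choice _ Hbad) as [u Hu].
  destruct (inI_seq_compact u (fun p => proj1 (Hu p))) as [phi [Hphi [x [Hx Hcv]]]].
  destruct (HP x Hx) as [dx [Hdx Hdx2]].
  destruct (Hcv (dx / 2)) as [P1 HP1]; [lra|].
  destruct (inv_INR_S_small (dx / 2)) as [M HM]; [lra|].
  set (p := max P1 M).
  destruct (proj2 (Hu (phi p)) x Hx) as [w [Hw [Hcl Hnp]]].
  apply Hnp, Hdx2; auto.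
  assert (Hle : / (INR (phi p) + 1) <= dx / 2).
  { apply Rlt_le. eapply Rle_lt_trans; [|apply (HM p); lia].
    apply Rinv_le_contravar; [pose proof (pos_INR p); lra|].
    apply Rplus_le_compat_r, le_INR, strictly_incr_ge; auto. }
  replace dx with (dx / 2 + dx / 2) by field. apply (sup_close_trans _ _ x (u (phi p)) w).
  - apply sup_close_sym, HP1. lia.
  - eapply sup_close_mono; [apply Hle | auto].
Qed.

Lemma total_bounded del : del > 0 -> exists L : list Pt,
  (forall q, In q L -> Sp q) /\ forall z, Sp z -> exists q, In q L /\ sup_close del q z.
Proof.
  intros Hdel. apply NNPP. intros Hn.
  assert (Hfar : forall L : list Pt, exists z, (forall q, In q L -> Sp q) ->
            Sp z /\ forall q, In q L -> ~ sup_close del q z).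
  { intros L. destruct (classic (forall q, In q L -> Sp q)) as [HL|HL].
    - apply NNPP. intros Hc. apply Hn. exists L. split; auto. intros z Hz. apply NNPP. intros Hc2.
      apply Hc. exists z. intros _. split; auto. intros q Hq Hcl. apply Hc2. exists q; auto.
    - exists (fun _ _ => 0). intros H; exfalso; auto. }
  destruct (choice _ Hfar) as [F HF].
  (* A greedy sequence of pairwise [del]-far points of [I] has no convergent subsequence. *)
  set (Ls := fix Ls p := match p with O => nil | S p' => Ls p' ++ (F (Ls p') :: nil) end).
  set (u := fun p => F (Ls p)).
  assert (HLs : forall p, (forall q, In q (Ls p) -> Sp q) /\ forall p', (p' < p)%nat -> In (u p') (Ls p)).
  { induction p as [|p [H1 H2]]; [split; [intros q [] | intros; lia]|]. simpl. split.
    - intros q Hq. apply in_app_or in Hq. destruct Hq as [Hq|[<-|[]]]; auto. apply HF; auto.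
    - intros p' Hp'. apply in_or_app. destruct (Nat.eq_dec p' p); [subst; right; left; auto | left; apply H2; lia]. }
  assert (Hu : forall p, Sp (u p)) by (intros p; apply HF, HLs).
  assert (Hsep : forall p p', (p' < p)%nat -> ~ sup_close del (u p') (u p))
    by (intros p p' Hp; apply (HF (Ls p)); apply HLs; auto).
  destruct (inI_seq_compact u Hu) as [phi [Hphi [x [Hx Hcv]]]].
  destruct (Hcv (del / 2)) as [P HP]; [lra|].
  apply (Hsep (phi (S P)) (phi P)); [apply Hphi|].
  replace del with (del / 2 + del / 2) by field. apply (sup_close_trans _ _ _ x).
  - apply HP; lia.
  - apply sup_close_sym, HP; lia.
Qed.

Lemma finite_subcover (P : Pt -> Pt -> Prop) :
  (forall y, Sp y -> exists del, del > 0 /\ forall z, Sp z -> sup_close del y z -> P y z) ->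
  exists L : list Pt, (forall y, In y L -> Sp y) /\ forall z, Sp z -> exists y, In y L /\ P y z.
Proof.
  intros HP. destruct (lebesgue_number P HP) as [del [Hdel Hleb]].
  destruct (total_bounded del Hdel) as [L' [HL'1 HL'2]].
  assert (HY : forall z, exists y, Sp z -> Sp y /\ forall w, Sp w -> sup_close del z w -> P y w).
  { intros z. destruct (classic (Sp z)) as [Hz|Hz].
    - destruct (Hleb z Hz) as [y Hy]. exists y; auto.
    - exists z. intros; exfalso; auto. }
  destruct (choice _ HY) as [Y HYp].
  exists (map Y L'). split.
  - intros y Hy. apply in_map_iff in Hy. destruct Hy as [q [<- Hq]]. apply HYp; auto.
  - intros z Hz. destruct (HL'2 z Hz) as [q [Hq Hcl]]. exists (Y q). split; [apply in_map; auto|].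
    apply HYp; auto.
Qed.

End SphereProduct.

Inductive poly_expr :=
  | PConst (r : R) | PVar (i k : nat) | PAdd (p q : poly_expr) | PMul (p q : poly_expr).

Fixpoint poly_eval (e : poly_expr) (X : Pt) : R :=
  match e with
  | PConst r => r
  | PVar i k => X i k
  | PAdd p q => poly_eval p X + poly_eval q X
  | PMul p q => poly_eval p X * poly_eval q X
  end.

Fixpoint poly_wf (n d : nat) (e : poly_expr) : Prop :=
  match e with
  | PConst _ => True
  | PVar i k => (i < n)%nat /\ (k < d)%nat
  | PAdd p q | PMul p q => poly_wf n d p /\ poly_wf n d q
  end.

(* On [[-1, 1]] these polynomials increase to [|t|]; they replace square roots in the lattice
   form of Stone-Weierstrass. *)
Fixpoint abs_approx (k : nat) (t : R) : R :=
  match k with O => 0 | S k' => abs_approx k' t + (t ^ 2 - abs_approx k' t ^ 2) / 2 end.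

Fixpoint abs_approx_expr (k : nat) (e : poly_expr) : poly_expr :=
  match k with
  | O => PConst 0
  | S k' => PAdd (abs_approx_expr k' e)
      (PMul (PConst (/2)) (PAdd (PMul e e) (PMul (PConst (-1)) (PMul (abs_approx_expr k' e) (abs_approx_expr k' e)))))
  end.

Lemma poly_eval_abs_approx_expr k e X : poly_eval (abs_approx_expr k e) X = abs_approx k (poly_eval e X).
Proof. induction k; simpl; auto. rewrite IHk. field. Qed.

Lemma poly_wf_abs_approx_expr n d k e : poly_wf n d e -> poly_wf n d (abs_approx_expr k e).
Proof. intros H; induction k; simpl; auto. repeat split; auto. Qed.

Lemma Rdiv_le_cross a b c e : 0 < b -> 0 < e -> a * e <= c * b -> a / b <= c / e.
Proof.
  intros Hb He H. replace (a / b) with ((a * e) * / (b * e)) by (field; lra).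
  replace (c / e) with ((c * b) * / (b * e)) by (field; lra).
  apply Rmult_le_compat_r; auto. apply Rlt_le, Rinv_0_lt_compat; nra.
Qed.

Lemma abs_approx_bound k t : Rabs t <= 1 ->
  0 <= abs_approx k t <= Rabs t /\ Rabs t - abs_approx k t <= 2 / (INR k + 2).
Proof.
  intros Ht. set (a := Rabs t). assert (Ha : 0 <= a) by apply Rabs_pos.
  assert (Hta : t ^ 2 = a ^ 2) by (unfold a; rewrite pow2_abs; auto).
  induction k as [|k [[H1 H2] H3]].
  - simpl. split; [lra|]. unfold a; lra.
  - change (abs_approx (S k) t) with (abs_approx k t + (t ^ 2 - abs_approx k t ^ 2) / 2). rewrite Hta. set (p := abs_approx k t) in *.
    rewrite S_INR. set (K := INR k) in *. assert (HK : 0 <= K) by apply pos_INR.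
    set (e := a - p) in *.
    assert (Hp' : a - (p + (a ^ 2 - p ^ 2) / 2) = e * (1 - (a + p) / 2)) by (unfold e; field).
    assert (Hu1 : 2 / (K + 2) <= 1) by (apply (Rmult_le_reg_r (K + 2)); [lra|]; unfold Rdiv; rewrite Rmult_assoc, Rinv_l by lra; lra).
    split; [split|].
    + assert (0 <= (a ^ 2 - p ^ 2) / 2) by (unfold Rdiv; apply Rmult_le_pos; [nra|lra]). lra.
    + assert (0 <= e * (1 - (a + p) / 2)) by (apply Rmult_le_pos; unfold e; unfold a in *; lra). lra.
    + rewrite Hp'. set (u := 2 / (K + 2)) in *.
      (* the error map [e -> e (1 - e/2)] is increasing on [[0, 1]] *)
      assert (e * (1 - (a + p) / 2) <= e * (1 - e / 2)) by (apply Rmult_le_compat_l; unfold e in *; lra).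
      assert (e * (1 - e / 2) <= u * (1 - u / 2)).
      { assert (0 <= (u - e) * (1 - (u + e) / 2)) by (apply Rmult_le_pos; unfold e in *; unfold a in *; lra). nra. }
      assert (u * (1 - u / 2) = 2 * (K + 1) / ((K + 2) * (K + 2))) by (unfold u; field; lra).
      assert (2 * (K + 1) / ((K + 2) * (K + 2)) <= 2 / (K + 1 + 2)) by (apply Rdiv_le_cross; nra).
      lra.
Qed.

Lemma abs_approx_uniform M eps : 0 < M -> 0 < eps ->
  exists k, forall s, Rabs s <= M -> Rabs (M * abs_approx k (s / M) - Rabs s) < eps.
Proof.
  intros HM Heps. destruct (inv_INR_S_small (eps / (2 * M))) as [k Hk]; [apply Rdiv_lt_0_compat; lra|].
  specialize (Hk k (le_n _)). exists k. intros s Hs.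
  assert (Ht : Rabs (s / M) <= 1).
  { unfold Rdiv. rewrite Rabs_mult, Rabs_inv, (Rabs_right M) by lra.
    apply (Rmult_le_reg_l M); [lra|]. replace (M * (Rabs s * / M)) with (Rabs s) by (field; lra). lra. }
  destruct (abs_approx_bound k _ Ht) as [[H0 H1] H2].
  assert (E : Rabs s = M * Rabs (s / M)).
  { unfold Rdiv. rewrite Rabs_mult, Rabs_inv, (Rabs_right M) by lra. field. lra. }
  assert (Hk2 : 2 / (INR k + 2) <= 2 * / (INR k + 1)) by (apply Rdiv_le_cross; pose proof (pos_INR k); lra).
  rewrite E, <- Rmult_minus_distr_l, Rabs_mult, (Rabs_right M), Rabs_left1 by lra.
  apply Rle_lt_trans with (M * (2 * / (INR k + 1))).
  - apply Rmult_le_compat_l; lra.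
  - apply (Rmult_lt_compat_l (2 * M)) in Hk; [|lra].
    replace (2 * M * (eps / (2 * M))) with eps in Hk by (field; lra). lra.
Qed.

Section StoneWeierstrass.
Variables (d n : nat).
Let Sp := inI d n.

Definition sup_continuous (g : Pt -> R) := forall x, Sp x -> forall eps, eps > 0 ->
  exists del, del > 0 /\ forall y, Sp y -> sup_close d n del x y -> Rabs (g y - g x) < eps.

Definition poly_approximable (g : Pt -> R) := forall eps, eps > 0 ->
  exists e, poly_wf n d e /\ forall x, Sp x -> Rabs (poly_eval e x - g x) < eps.

Lemma poly_eval_lipschitz e : poly_wf n d e -> exists B L, 0 <= B /\ 0 <= L /\
  (forall x, Sp x -> Rabs (poly_eval e x) <= B) /\
  forall x y del, Sp x -> Sp y -> sup_close d n del x y -> Rabs (poly_eval e x - poly_eval e y) <= L * del.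
Proof.
  induction e as [r|i k|e1 IH1 e2 IH2|e1 IH1 e2 IH2]; simpl; intros Hw.
  - exists (Rabs r), 0. repeat split; [apply Rabs_pos | lra | intros; lra |].
    intros; rewrite Rminus_diag, Rabs_R0; lra.
  - exists 1, 1. repeat split; [lra | lra | intros; apply (coord_bound d n); tauto |].
    intros x y del Hx Hy Hc. specialize (Hc i k (proj1 Hw) (proj2 Hw)). lra.
  - destruct Hw as [Hw1 Hw2].
    destruct (IH1 Hw1) as [B1 [L1 [HB1 [HL1 [Hb1 Hl1]]]]]. destruct (IH2 Hw2) as [B2 [L2 [HB2 [HL2 [Hb2 Hl2]]]]].
    exists (B1 + B2), (L1 + L2). repeat split; try lra.
    + intros x Hx. eapply Rle_trans; [apply Rabs_triang|]. specialize (Hb1 x Hx); specialize (Hb2 x Hx); lra.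
    + intros x y del Hx Hy Hc.
      replace (poly_eval e1 x + poly_eval e2 x - (poly_eval e1 y + poly_eval e2 y))
        with ((poly_eval e1 x - poly_eval e1 y) + (poly_eval e2 x - poly_eval e2 y)) by ring.
      eapply Rle_trans; [apply Rabs_triang|].
      specialize (Hl1 x y del Hx Hy Hc). specialize (Hl2 x y del Hx Hy Hc). lra.
  - destruct Hw as [Hw1 Hw2].
    destruct (IH1 Hw1) as [B1 [L1 [HB1 [HL1 [Hb1 Hl1]]]]]. destruct (IH2 Hw2) as [B2 [L2 [HB2 [HL2 [Hb2 Hl2]]]]].
    exists (B1 * B2), (B1 * L2 + B2 * L1). repeat split; [apply Rmult_le_pos; auto | nra | |].
    + intros x Hx. rewrite Rabs_mult. apply Rmult_le_compat; auto; apply Rabs_pos.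
    + intros x y del Hx Hy Hc.
      replace (poly_eval e1 x * poly_eval e2 x - poly_eval e1 y * poly_eval e2 y)
        with (poly_eval e1 x * (poly_eval e2 x - poly_eval e2 y) + poly_eval e2 y * (poly_eval e1 x - poly_eval e1 y))
        by ring.
      eapply Rle_trans; [apply Rabs_triang|]. rewrite !Rabs_mult.
      specialize (Hl1 x y del Hx Hy Hc). specialize (Hl2 x y del Hx Hy Hc).
      specialize (Hb1 x Hx). specialize (Hb2 y Hy).
      assert (Rabs (poly_eval e1 x) * Rabs (poly_eval e2 x - poly_eval e2 y) <= B1 * (L2 * del))
        by (apply Rmult_le_compat; auto; apply Rabs_pos).
      assert (Rabs (poly_eval e2 y) * Rabs (poly_eval e1 x - poly_eval e1 y) <= B2 * (L1 * del))
        by (apply Rmult_le_compat; auto; apply Rabs_pos).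
      nra.
Qed.

Lemma Rabs_scal_lt r u eps : 0 < eps -> Rabs u < eps / (Rabs r + 1) -> Rabs (r * u) < eps.
Proof.
  intros Heps Hu. pose proof (Rabs_pos r). rewrite Rabs_mult.
  apply Rle_lt_trans with (Rabs r * (eps / (Rabs r + 1))); [apply Rmult_le_compat_l; lra|].
  apply (Rmult_lt_reg_l (Rabs r + 1)); [lra|].
  replace ((Rabs r + 1) * (Rabs r * (eps / (Rabs r + 1)))) with (Rabs r * eps) by (field; lra). nra.
Qed.

Lemma sup_continuous_poly e : poly_wf n d e -> sup_continuous (poly_eval e).
Proof.
  intros Hw x Hx eps Heps. destruct (poly_eval_lipschitz e Hw) as [B [L [_ [HL [_ Hl]]]]].
  exists (eps / (L + 1)). split; [apply Rdiv_lt_0_compat; lra|].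
  intros y Hy Hc. rewrite Rabs_minus_sym. eapply Rle_lt_trans; [apply (Hl x y _ Hx Hy Hc)|].
  apply (Rmult_lt_reg_l (L + 1)); [lra|].
  replace ((L + 1) * (L * (eps / (L + 1)))) with (L * eps) by (field; lra). nra.
Qed.

Lemma sup_continuous_ext g h : (forall x, Sp x -> g x = h x) -> sup_continuous g -> sup_continuous h.
Proof.
  intros E H x Hx eps Heps. destruct (H x Hx eps Heps) as [del [Hd Hd2]]. exists del; split; auto.
  intros y Hy Hc. rewrite <- !E by auto. auto.
Qed.

Lemma sup_continuous_add g h : sup_continuous g -> sup_continuous h -> sup_continuous (fun x => g x + h x).
Proof.
  intros H1 H2 x Hx eps Heps.
  destruct (H1 x Hx (eps / 2)) as [d1 [Hd1 H1']]; [lra|]. destruct (H2 x Hx (eps / 2)) as [d2 [Hd2 H2']]; [lra|].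
  exists (Rmin d1 d2). split; [apply Rmin_pos; auto|]. intros y Hy Hc.
  replace (g y + h y - (g x + h x)) with ((g y - g x) + (h y - h x)) by ring.
  eapply Rle_lt_trans; [apply Rabs_triang|].
  assert (Rabs (g y - g x) < eps / 2) by (apply H1'; auto; eapply sup_close_mono; [apply Rmin_l | eauto]).
  assert (Rabs (h y - h x) < eps / 2) by (apply H2'; auto; eapply sup_close_mono; [apply Rmin_r | eauto]).
  lra.
Qed.

Lemma sup_continuous_scale r g : sup_continuous g -> sup_continuous (fun x => r * g x).
Proof.
  intros H x Hx eps Heps. destruct (H x Hx (eps / (Rabs r + 1))) as [del [Hd H']].
  { apply Rdiv_lt_0_compat; [lra | pose proof (Rabs_pos r); lra]. }
  exists del. split; auto. intros y Hy Hc. replace (r * g y - r * g x) with (r * (g y - g x)) by ring.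
  apply Rabs_scal_lt; auto.
Qed.

Lemma sup_continuous_abs g : sup_continuous g -> sup_continuous (fun x => Rabs (g x)).
Proof.
  intros H x Hx eps Heps. destruct (H x Hx eps Heps) as [del [Hd H']]. exists del; split; auto.
  intros y Hy Hc. eapply Rle_lt_trans; [apply Rabs_triang_inv2 | auto].
Qed.

Lemma Rmax_abs a c : Rmax a c = / 2 * ((a + c) + Rabs (a + (-1) * c)).
Proof. unfold Rmax, Rabs. destruct (Rle_dec a c); destruct (Rcase_abs (a + -1 * c)); lra. Qed.

Lemma Rmin_abs a c : Rmin a c = / 2 * ((a + c) + (-1) * Rabs (a + (-1) * c)).
Proof. unfold Rmin, Rabs. destruct (Rle_dec a c); destruct (Rcase_abs (a + -1 * c)); lra. Qed.

Lemma sup_continuous_max g h : sup_continuous g -> sup_continuous h -> sup_continuous (fun x => Rmax (g x) (h x)).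
Proof.
  intros H1 H2. apply (sup_continuous_ext (fun x => / 2 * ((g x + h x) + Rabs (g x + (-1) * h x))));
    [intros; rewrite Rmax_abs; auto|].
  apply sup_continuous_scale, sup_continuous_add; [apply sup_continuous_add; auto|].
  apply sup_continuous_abs, sup_continuous_add, sup_continuous_scale; auto.
Qed.

Lemma poly_approximable_ext g h : (forall x, Sp x -> g x = h x) -> poly_approximable g -> poly_approximable h.
Proof.
  intros E H eps Heps. destruct (H eps Heps) as [e [He H']]. exists e; split; auto. intros; rewrite <- E; auto.
Qed.

Lemma poly_approximable_poly e : poly_wf n d e -> poly_approximable (poly_eval e).
Proof. intros Hw eps Heps. exists e; split; auto. intros; rewrite Rminus_diag, Rabs_R0; lra. Qed.

Lemma poly_approximable_add g h : poly_approximable g -> poly_approximable h ->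
  poly_approximable (fun x => g x + h x).
Proof.
  intros H1 H2 eps Heps.
  destruct (H1 (eps / 2)) as [e1 [Hw1 He1]]; [lra|]. destruct (H2 (eps / 2)) as [e2 [Hw2 He2]]; [lra|].
  exists (PAdd e1 e2). split; [simpl; auto|]. intros x Hx. simpl.
  replace (poly_eval e1 x + poly_eval e2 x - (g x + h x)) with ((poly_eval e1 x - g x) + (poly_eval e2 x - h x))
    by ring.
  eapply Rle_lt_trans; [apply Rabs_triang|]. specialize (He1 x Hx). specialize (He2 x Hx). lra.
Qed.

Lemma poly_approximable_scale r g : poly_approximable g -> poly_approximable (fun x => r * g x).
Proof.
  intros H eps Heps. destruct (H (eps / (Rabs r + 1))) as [e [Hw He]].
  { apply Rdiv_lt_0_compat; [lra | pose proof (Rabs_pos r); lra]. }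
  exists (PMul (PConst r) e). split; [simpl; auto|]. intros x Hx. simpl.
  replace (r * poly_eval e x - r * g x) with (r * (poly_eval e x - g x)) by ring.
  apply Rabs_scal_lt; auto.
Qed.

Lemma poly_approximable_abs g : poly_approximable g -> poly_approximable (fun x => Rabs (g x)).
Proof.
  intros H eps Heps. destruct (H (eps / 2)) as [e [Hw He]]; [lra|].
  destruct (poly_eval_lipschitz e Hw) as [B [L [HB [_ [Hb _]]]]].
  set (M := B + 1).
  destruct (abs_approx_uniform M (eps / 2)) as [k Hk]; [unfold M; lra | lra|].
  exists (PMul (PConst M) (abs_approx_expr k (PMul (PConst (/ M)) e))).
  split; [simpl; split; auto; apply poly_wf_abs_approx_expr; simpl; auto|].
  intros x Hx. simpl. rewrite poly_eval_abs_approx_expr. simpl.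
  replace (/ M * poly_eval e x) with (poly_eval e x / M) by (unfold Rdiv; ring).
  assert (H1 : Rabs (M * abs_approx k (poly_eval e x / M) - Rabs (poly_eval e x)) < eps / 2)
    by (apply Hk; specialize (Hb x Hx); unfold M; lra).
  assert (H2 : Rabs (Rabs (poly_eval e x) - Rabs (g x)) < eps / 2)
    by (eapply Rle_lt_trans; [apply Rabs_triang_inv2 | apply He; auto]).
  replace (M * abs_approx k (poly_eval e x / M) - Rabs (g x))
    with ((M * abs_approx k (poly_eval e x / M) - Rabs (poly_eval e x)) + (Rabs (poly_eval e x) - Rabs (g x)))
    by ring.
  eapply Rle_lt_trans; [apply Rabs_triang | lra].
Qed.

Lemma poly_approximable_max g h : poly_approximable g -> poly_approximable h ->
  poly_approximable (fun x => Rmax (g x) (h x)).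
Proof.
  intros H1 H2. apply (poly_approximable_ext (fun x => / 2 * ((g x + h x) + Rabs (g x + (-1) * h x))));
    [intros; rewrite Rmax_abs; auto|].
  apply poly_approximable_scale, poly_approximable_add; [apply poly_approximable_add; auto|].
  apply poly_approximable_abs, poly_approximable_add, poly_approximable_scale; auto.
Qed.

Lemma poly_approximable_min g h : poly_approximable g -> poly_approximable h ->
  poly_approximable (fun x => Rmin (g x) (h x)).
Proof.
  intros H1 H2. apply (poly_approximable_ext (fun x => / 2 * ((g x + h x) + (-1) * Rabs (g x + (-1) * h x))));
    [intros; rewrite Rmin_abs; auto|].
  apply poly_approximable_scale, poly_approximable_add; [apply poly_approximable_add; auto|].
  apply poly_approximable_scale, poly_approximable_abs, poly_approximable_add, poly_approximable_scale; auto.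
Qed.

(* Polynomials separate the points of [I]: an affine function of one coordinate
   interpolates any continuous [g] at two points. *)
Lemma poly_interpolate2 g x y : sup_continuous g -> Sp x -> Sp y ->
  exists e, poly_wf n d e /\ poly_eval e x = g x /\ poly_eval e y = g y.
Proof.
  intros Hg Hx Hy.
  destruct (classic (exists i k, (i < n)%nat /\ (k < d)%nat /\ x i k <> y i k)) as [[i [k [Hi [Hk Hne]]]]|Hn].
  - exists (PAdd (PConst (g x))
              (PMul (PConst ((g y - g x) / (y i k - x i k))) (PAdd (PVar i k) (PConst (- x i k))))).
    simpl. split; [tauto|]. split; [ring|]. field. intros Hc; apply Hne; lra.
  - assert (E : g x = g y).
    { destruct (Req_dec (g x) (g y)) as [|Hne]; auto. exfalso.
      assert (Hp : Rabs (g y - g x) > 0) by (apply Rabs_pos_lt; lra).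
      destruct (Hg x Hx _ Hp) as [del [Hd Hd2]].
      assert (sup_close d n del x y).
      { intros i k Hi Hk. destruct (Req_dec (x i k) (y i k)) as [E|E].
        - rewrite E, Rminus_diag, Rabs_R0; lra.
        - exfalso; apply Hn; exists i, k; auto. }
      specialize (Hd2 y Hy H). lra. }
    exists (PConst (g x)). simpl. auto.
Qed.

Fixpoint fold_max (L : list Pt) (F : Pt -> Pt -> R) (b : Pt -> R) (z : Pt) : R :=
  match L with nil => b z | y :: L' => Rmax (F y z) (fold_max L' F b z) end.
Fixpoint fold_min (L : list Pt) (F : Pt -> Pt -> R) (b : Pt -> R) (z : Pt) : R :=
  match L with nil => b z | y :: L' => Rmin (F y z) (fold_min L' F b z) end.

Lemma fold_max_ge L F b z y : In y L -> F y z <= fold_max L F b z.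
Proof.
  induction L as [|a L IH]; simpl; [intros []|]. intros [<-|H]; [apply Rmax_l|].
  eapply Rle_trans; [apply IH; auto | apply Rmax_r].
Qed.

Lemma fold_max_const L F b z v : (forall y, In y L -> F y z = v) -> b z = v -> fold_max L F b z = v.
Proof.
  induction L as [|a L IH]; simpl; intros H Hb; auto. rewrite IH, H; auto.
  unfold Rmax; destruct (Rle_dec v v); auto.
Qed.

Lemma fold_min_le L F b z y : In y L -> fold_min L F b z <= F y z.
Proof.
  induction L as [|a L IH]; simpl; [intros []|]. intros [<-|H]; [apply Rmin_l|].
  eapply Rle_trans; [apply Rmin_r | apply IH; auto].
Qed.

Lemma fold_min_gt L F b z v : (forall y, In y L -> v < F y z) -> v < b z -> v < fold_min L F b z.
Proof.
  induction L as [|a L IH]; simpl; intros H Hb; auto.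
  apply Rmin_glb_lt; [apply H | apply IH]; auto.
Qed.

Lemma poly_approximable_fold_max L F b : (forall y, In y L -> poly_approximable (F y)) -> poly_approximable b ->
  poly_approximable (fold_max L F b).
Proof.
  induction L as [|a L IH]; simpl; intros H Hb; auto.
  apply (poly_approximable_max (F a) (fold_max L F b)); [apply H | apply IH]; auto.
Qed.

Lemma poly_approximable_fold_min L F b : (forall y, In y L -> poly_approximable (F y)) -> poly_approximable b ->
  poly_approximable (fold_min L F b).
Proof.
  induction L as [|a L IH]; simpl; intros H Hb; auto.
  apply (poly_approximable_min (F a) (fold_min L F b)); [apply H | apply IH]; auto.
Qed.

Lemma sup_continuous_fold_max L F b : (forall y, In y L -> sup_continuous (F y)) -> sup_continuous b ->
  sup_continuous (fold_max L F b).
Proof.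
  induction L as [|a L IH]; simpl; intros H Hb; auto.
  apply (sup_continuous_max (F a) (fold_max L F b)); [apply H | apply IH]; auto.
Qed.

Lemma sup_continuous_close_at F g y eps : sup_continuous F -> sup_continuous g -> Sp y -> eps > 0 ->
  F y = g y -> exists del, del > 0 /\ forall z, Sp z -> sup_close d n del y z -> Rabs (F z - g z) < eps.
Proof.
  intros HF Hg Hy Heps Hyy.
  assert (Hc : sup_continuous (fun x => F x + (-1) * g x))
    by (apply sup_continuous_add, sup_continuous_scale; auto).
  destruct (Hc y Hy eps Heps) as [del [Hdel Hd]]. exists del. split; auto.
  intros z Hz Hcl. specialize (Hd z Hz Hcl). rewrite Hyy in Hd.
  replace (F z + -1 * g z - (g y + -1 * g y)) with (F z - g z) in Hd by ring. auto.
Qed.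

(* The max of finitely many two-point interpolants, one per set of a finite subcover. *)
Lemma lower_approx_at g eps x : sup_continuous g -> eps > 0 -> Sp x ->
  exists F, poly_approximable F /\ sup_continuous F /\ F x = g x /\ forall z, Sp z -> g z - eps < F z.
Proof.
  intros Hg Heps Hx.
  assert (HE : forall y, exists e, Sp y -> poly_wf n d e /\ poly_eval e x = g x /\ poly_eval e y = g y).
  { intros y. destruct (classic (Sp y)) as [Hy|Hy].
    - destruct (poly_interpolate2 g x y Hg Hx Hy) as [e He]. exists e; auto.
    - exists (PConst 0). intros; exfalso; auto. }
  destruct (choice _ HE) as [E HEf].
  destruct (finite_subcover d n (fun y z => g z - eps < poly_eval (E y) z)) as [L [HL1 HL2]].
  { intros y Hy. destruct (HEf y Hy) as [Hw [_ Hyy]].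
    destruct (sup_continuous_close_at (poly_eval (E y)) g y eps) as [del [Hdel Hd]];
      auto using sup_continuous_poly.
    exists del. split; auto. intros z Hz Hcl. specialize (Hd z Hz Hcl). apply Rabs_def2 in Hd. lra. }
  exists (fold_max L (fun y => poly_eval (E y)) (poly_eval (E x))). split; [|split; [|split]].
  - apply poly_approximable_fold_max; [intros y Hy|];
      apply poly_approximable_poly; [apply (HEf y (HL1 y Hy)) | apply (HEf x Hx)].
  - apply sup_continuous_fold_max; [intros y Hy|];
      apply sup_continuous_poly; [apply (HEf y (HL1 y Hy)) | apply (HEf x Hx)].
  - apply fold_max_const; [intros y Hy|]; [apply (HEf y (HL1 y Hy)) | apply (HEf x Hx)].
  - intros z Hz. destruct (HL2 z Hz) as [y [Hy Hyz]]. eapply Rlt_le_trans; [apply Hyz|].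
    apply (fold_max_ge L (fun y => poly_eval (E y))); auto.
Qed.

Theorem stone_weierstrass g : sup_continuous g -> poly_approximable g.
Proof.
  intros Hg eps Heps.
  destruct (classic (exists x0, Sp x0)) as [[x0 Hx0]|Hn].
  2: { exists (PConst 0). split; [simpl; auto|]. intros x Hx; exfalso; apply Hn; exists x; auto. }
  assert (HS : forall x, exists F, Sp x -> poly_approximable F /\ sup_continuous F /\ F x = g x /\
                                        forall z, Sp z -> g z - eps / 2 < F z).
  { intros x. destruct (classic (Sp x)) as [Hx|Hx].
    - destruct (lower_approx_at g (eps / 2) x Hg ltac:(lra) Hx) as [F HF]. exists F; auto.
    - exists (fun _ => 0). intros; exfalso; auto. }
  destruct (choice _ HS) as [Ff HFf].
  destruct (finite_subcover d n (fun x z => Ff x z < g z + eps / 2)) as [L [HL1 HL2]].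
  { intros x Hx. destruct (HFf x Hx) as [_ [Hc [Hxx _]]].
    destruct (sup_continuous_close_at (Ff x) g x (eps / 2)) as [del [Hdel Hd]]; auto; [lra|].
    exists del. split; auto. intros z Hz Hcl. specialize (Hd z Hz Hcl). apply Rabs_def2 in Hd. lra. }
  set (Phi := fold_min L Ff (Ff x0)).
  assert (HPhi : poly_approximable Phi)
    by (apply poly_approximable_fold_min; [intros x Hx; apply (HFf x (HL1 x Hx)) | apply (HFf x0 Hx0)]).
  destruct (HPhi (eps / 2)) as [e [Hw He]]; [lra|].
  exists e. split; auto. intros z Hz.
  assert (B1 : Phi z < g z + eps / 2).
  { destruct (HL2 z Hz) as [x [Hx Hxz]]. eapply Rle_lt_trans; [apply (fold_min_le L Ff (Ff x0) z x Hx) | auto]. }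
  assert (B2 : g z - eps / 2 < Phi z)
    by (apply fold_min_gt; [intros x Hx; apply (HFf x (HL1 x Hx)) | apply (HFf x0 Hx0)]; auto).
  specialize (He z Hz). apply Rabs_def2 in He. apply Rabs_def1; lra.
Qed.

End StoneWeierstrass.

Lemma pow_kernel_le_series (a : nat -> R) (f : R -> R) Sp K t :
  (forall t, 0 <= a t) -> (forall x, infinite_sum (fun t => a t * x ^ t) (f x)) ->
  psd_kernel Sp K -> 0 < a t -> kernel_le Sp (fun x y => K x y ^ t) (fun x y => / a t * f (K x y)).
Proof.
  intros Ha Hf HK Hat.
  apply (kernel_le_ext Sp (fun x y => / a t * rsum (S t) (fun u => (if Nat.eqb u t then a t else 0) * K x y ^ u))
                         (fun x y => / a t * f (K x y))); [| intros; auto |].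
  - intros; cbv beta. rewrite rsum_delta by lia. field. lra.
  - apply kernel_le_scale; [apply Rlt_le, Rinv_0_lt_compat; auto|].
    apply (partial_series_kernel_le a f Ha Hf Sp K (S t)); auto.
    intros u Hu. destruct (Nat.eqb_spec u t); [subst; lra | split; [lra | apply Ha]].
Qed.

Lemma power_sum_kernel_le_series (a : nat -> R) (f : R -> R) Sp K T m :
  (forall t, 0 <= a t) -> (forall x, infinite_sum (fun t => a t * x ^ t) (f x)) ->
  psd_kernel Sp K -> 0 < m -> (forall t, (t <= T)%nat -> m <= a t) ->
  kernel_le Sp (fun x y => rsum (S T) (fun t => K x y ^ t)) (fun x y => / m * f (K x y)).
Proof.
  intros Ha Hf HK Hm HmT.
  apply (kernel_le_ext Sp (fun x y => / m * rsum (S T) (fun t => m * K x y ^ t)) (fun x y => / m * f (K x y)));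
    [| intros; auto |].
  - intros; cbv beta. rewrite rsum_scal, <- Rmult_assoc, Rinv_l, Rmult_1_l by lra. reflexivity.
  - apply kernel_le_scale; [apply Rlt_le, Rinv_0_lt_compat; auto|].
    apply (partial_series_kernel_le a f Ha Hf Sp K (S T)); auto.
    intros t Ht. split; [lra | apply HmT; lia].
Qed.

Lemma pos_lower_bound (c : nat -> R) T : (forall t, (t <= T)%nat -> 0 < c t) ->
  exists m, 0 < m /\ forall t, (t <= T)%nat -> m <= c t.
Proof.
  induction T as [|T IH]; intros H.
  - exists (c O). split; [apply H; lia|]. intros t Ht. replace t with O by lia. lra.
  - destruct IH as [m [Hm Hm2]]; [intros; apply H; lia|].
    exists (Rmin m (c (S T))). split; [apply Rmin_pos; [auto | apply H; lia]|].
    intros t Ht. destruct (Nat.eq_dec t (S T)); [subst; apply Rmin_r|].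
    eapply Rle_trans; [apply Rmin_l | apply Hm2; lia].
Qed.

Fixpoint rprod (m : nat) (F : nat -> R) : R := match m with O => 1 | S m' => rprod m' F * F m' end.

Lemma rprod_ext m F G : (forall i, (i < m)%nat -> F i = G i) -> rprod m F = rprod m G.
Proof. induction m; simpl; intros H; auto. rewrite IHm, H by (auto; lia). auto. Qed.

Lemma rprod_mul m F G : rprod m F * rprod m G = rprod m (fun i => F i * G i).
Proof. induction m; simpl; [ring|]. rewrite <- IHm. ring. Qed.

Lemma rprod_1 m : rprod m (fun _ => 1) = 1.
Proof. induction m; simpl; auto. rewrite IHm; ring. Qed.

Lemma rprod_scal m c F : rprod m (fun i => c * F i) = c ^ m * rprod m F.
Proof. induction m; simpl; [ring|]. rewrite IHm. ring. Qed.

Section KernelProducts.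
Variable Sp : Pt -> Prop.

Lemma psd_kernel_rprod m (A : nat -> kernel) : (forall i, (i < m)%nat -> psd_kernel Sp (A i)) ->
  psd_kernel Sp (fun X Y => rprod m (fun i => A i X Y)).
Proof.
  induction m; intros H; simpl; [apply psd_kernel_const; lra|].
  apply (psd_kernel_mul Sp (fun X Y => rprod m (fun i => A i X Y)) (A m)); [apply IHm; intros|]; apply H; lia.
Qed.

Lemma kernel_le_rprod m (A B : nat -> kernel) :
  (forall i, (i < m)%nat -> psd_kernel Sp (A i) /\ kernel_le Sp (A i) (B i)) ->
  kernel_le Sp (fun X Y => rprod m (fun i => A i X Y)) (fun X Y => rprod m (fun i => B i X Y)).
Proof.
  induction m; intros H; simpl; [apply kernel_le_refl; auto|].
  apply (kernel_le_mul Sp (fun X Y => rprod m (fun i => A i X Y)) (A m));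
    [apply psd_kernel_rprod; intros; apply H; lia | apply IHm; intros; apply H; lia | apply H; lia | apply H; lia].
Qed.

Lemma kernel_le_1_rprod m (A : nat -> kernel) : (forall i, (i < m)%nat -> kernel_le Sp (fun _ _ => 1) (A i)) ->
  kernel_le Sp (fun _ _ => 1) (fun X Y => rprod m (fun i => A i X Y)).
Proof.
  induction m; intros H; simpl; [apply kernel_le_refl; auto|].
  apply (kernel_le_ext Sp (fun _ _ => 1 * 1) (fun X Y => rprod m (fun i => A i X Y) * A m X Y));
    [intros; ring | intros; auto |].
  apply (kernel_le_mul Sp (fun _ _ => 1) (fun _ _ => 1));
    [apply psd_kernel_const; lra | apply IHm; intros; apply H; lia | apply psd_kernel_const; lra | apply H; lia].
Qed.

Lemma kernel_le_rprod_factor m (A : nat -> kernel) j :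
  (forall i, (i < m)%nat -> kernel_le Sp (fun _ _ => 1) (A i)) -> (j < m)%nat ->
  kernel_le Sp (A j) (fun X Y => rprod m (fun i => A i X Y)).
Proof.
  assert (Hpsd : forall i, kernel_le Sp (fun _ _ => 1) (A i) -> psd_kernel Sp (A i))
    by (intros i Hi; apply (psd_kernel_le Sp _ _ (psd_kernel_const Sp 1 ltac:(lra)) Hi)).
  induction m; intros H Hj; [lia|]. simpl. destruct (Nat.eq_dec j m) as [->|Hjm].
  - apply (kernel_le_ext Sp (fun X Y => 1 * A m X Y) (fun X Y => rprod m (fun i => A i X Y) * A m X Y));
      [intros; ring | intros; auto |].
    apply kernel_le_mul; [apply psd_kernel_const; lra | apply kernel_le_1_rprod; intros; apply H; lia |
                          apply Hpsd, H; lia |].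
    apply kernel_le_refl_psd, Hpsd, H; lia.
  - apply (kernel_le_ext Sp (fun X Y => A j X Y * 1) (fun X Y => rprod m (fun i => A i X Y) * A m X Y));
      [intros; ring | intros; auto |].
    apply kernel_le_mul; [apply Hpsd, H; lia | apply IHm; intros; try apply H; lia |
                          apply psd_kernel_const; lra | apply H; lia].
Qed.

Lemma kernel_le_rprod_pow_rsum m (k : nat -> kernel) : (forall i, (i < m)%nat -> psd_kernel Sp (k i)) ->
  kernel_le Sp (fun X Y => rprod m (fun i => k i X Y)) (fun X Y => rsum m (fun i => k i X Y) ^ m).
Proof.
  induction m; intros H; simpl; [apply kernel_le_refl; auto|].
  assert (Hs : psd_kernel Sp (fun X Y => rsum m (fun i => k i X Y))) by (apply psd_kernel_rsum; intros; apply H; lia).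
  assert (Hkm : psd_kernel Sp (k m)) by (apply H; lia).
  assert (Hs1 : psd_kernel Sp (fun X Y => rsum m (fun i => k i X Y) + k m X Y)) by (apply psd_kernel_add; auto).
  apply kernel_le_trans with (fun X Y => rsum m (fun i => k i X Y) ^ m * (rsum m (fun i => k i X Y) + k m X Y)).
  - apply (kernel_le_mul Sp _ (k m));
      [apply psd_kernel_rprod; intros; apply H; lia | apply IHm; intros; apply H; lia | auto |].
    apply (psd_kernel_ext Sp (fun X Y => rsum m (fun i => k i X Y))); [intros; ring | auto].
  - apply (kernel_le_ext Sp (fun X Y => rsum m (fun i => k i X Y) ^ m * (rsum m (fun i => k i X Y) + k m X Y))
                           (fun X Y => (rsum m (fun i => k i X Y) + k m X Y) ^ m * (rsum m (fun i => k i X Y) + k m X Y)));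
      [intros; auto | intros; ring |].
    apply kernel_le_mul; [apply psd_kernel_pow; auto | | auto |].
    + apply kernel_le_pow; auto. apply (psd_kernel_ext Sp (k m)); [intros; ring | auto].
    + apply kernel_le_refl_psd; auto.
Qed.

(* Each inductive step leaves the psd remainder [2^T (L^(T+1) + 1)]. *)
Lemma kernel_le_one_plus_pow L T : psd_kernel Sp L ->
  kernel_le Sp (fun X Y => (1 + L X Y) ^ T) (fun X Y => 2 ^ T * rsum (S T) (fun t => L X Y ^ t)).
Proof.
  intros HL.
  assert (Hgeom : forall l M, l * rsum M (fun t => l ^ t) = rsum (S M) (fun t => l ^ t) - 1).
  { intros l M. induction M; simpl; [ring|]. simpl in IHM. rewrite Rmult_plus_distr_l, IHM. ring. }
  assert (H1L : psd_kernel Sp (fun X Y => 1 + L X Y)) by (apply psd_kernel_add; auto; apply psd_kernel_const; lra).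
  induction T; simpl.
  - apply (kernel_le_ext Sp (fun _ _ => 1) (fun _ _ => 1)); [intros; ring | intros; ring | apply kernel_le_refl; auto].
  - apply kernel_le_trans with (fun X Y => (1 + L X Y) * (2 ^ T * rsum (S T) (fun t => L X Y ^ t))).
    + apply kernel_le_mul; auto; [|apply psd_kernel_pow; auto].
      apply kernel_le_refl_psd; auto.
    + apply (psd_kernel_ext Sp (fun X Y => 2 ^ T * (L X Y ^ (S T) + 1))).
      * intros X Y _ _. pose proof (Hgeom (L X Y) (S T)) as E. simpl rsum in *. simpl pow in *. nra.
      * apply psd_kernel_scale; [apply pow_le; lra|].
        apply psd_kernel_add; [apply psd_kernel_pow; auto | apply psd_kernel_const; lra].
Qed.

End KernelProducts.

Definition poly_kernel (d n T : nat) : kernel := fun X Y => rprod n (fun i => (1 + patch_kernel d i X Y) ^ T).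

Section PolyKernel.
Variables (Sp : Pt -> Prop) (d n : nat).

Lemma psd_one_plus_patch i : psd_kernel Sp (fun X Y => 1 + patch_kernel d i X Y).
Proof. apply psd_kernel_add; [apply psd_kernel_const; lra | apply psd_patch_kernel]. Qed.

Lemma one_le_one_plus_patch_pow i T : kernel_le Sp (fun _ _ => 1) (fun X Y => (1 + patch_kernel d i X Y) ^ T).
Proof.
  apply (kernel_le_ext Sp (fun _ _ => 1 ^ T) (fun X Y => (1 + patch_kernel d i X Y) ^ T)); [intros; apply pow1 | auto |].
  apply (kernel_le_pow Sp (fun _ _ => 1)); [apply psd_kernel_const; lra|].
  apply (psd_kernel_ext Sp (patch_kernel d i)); [intros; ring | apply psd_patch_kernel].
Qed.

Lemma psd_poly_kernel T : psd_kernel Sp (poly_kernel d n T).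
Proof. apply psd_kernel_rprod. intros; apply psd_kernel_pow, psd_one_plus_patch. Qed.

Lemma poly_kernel_mono T T' : (T <= T')%nat -> kernel_le Sp (poly_kernel d n T) (poly_kernel d n T').
Proof.
  intros H. apply kernel_le_rprod. intros i Hi. split; [apply psd_kernel_pow, psd_one_plus_patch|].
  apply (kernel_le_ext Sp (fun X Y => (1 + patch_kernel d i X Y) ^ T * 1)
                          (fun X Y => (1 + patch_kernel d i X Y) ^ T * (1 + patch_kernel d i X Y) ^ (T' - T)));
    [intros; ring | intros; rewrite <- pow_add; f_equal; lia |].
  apply kernel_le_mul; [apply psd_kernel_pow, psd_one_plus_patch | | apply psd_kernel_const; lra |
                        apply one_le_one_plus_patch_pow].
  apply kernel_le_refl_psd, psd_kernel_pow, psd_one_plus_patch.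
Qed.

Lemma dominated_poly_kernel e : poly_wf n d e -> exists T, dominated Sp (poly_kernel d n T) (poly_eval e).
Proof.
  induction e as [r|i k|e1 IH1 e2 IH2|e1 IH1 e2 IH2]; simpl; intros Hw.
  - exists O. apply (dominated_ext Sp (fun _ _ => 1) _ (fun _ => r)); [| auto | apply dominated_const].
    intros; unfold poly_kernel; simpl. rewrite rprod_1; auto.
  - exists 1%nat. destruct Hw as [Hi Hk]. apply (dominated_le Sp (fun X Y => 1 + patch_kernel d i X Y)).
    + apply (dominated_le Sp (patch_kernel d i)); [apply dominated_coord; auto|].
      apply (psd_kernel_ext Sp (fun _ _ => 1)); [intros; ring | apply psd_kernel_const; lra].
    + apply (kernel_le_ext Sp (fun X Y => (1 + patch_kernel d i X Y) ^ 1)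
                              (fun X Y => rprod n (fun i0 => (1 + patch_kernel d i0 X Y) ^ 1)));
        [intros; ring | intros; auto |].
      apply (kernel_le_rprod_factor Sp n (fun i0 X Y => (1 + patch_kernel d i0 X Y) ^ 1)); auto.
      intros; apply one_le_one_plus_patch_pow.
  - destruct Hw as [H1 H2]. destruct (IH1 H1) as [T1 HT1]. destruct (IH2 H2) as [T2 HT2].
    exists (max T1 T2). apply dominated_add.
    + apply (dominated_le Sp (poly_kernel d n T1)); auto. apply poly_kernel_mono; lia.
    + apply (dominated_le Sp (poly_kernel d n T2)); auto. apply poly_kernel_mono; lia.
  - destruct Hw as [H1 H2]. destruct (IH1 H1) as [T1 HT1]. destruct (IH2 H2) as [T2 HT2].
    exists (T1 + T2)%nat.
    apply (dominated_ext Sp (fun X Y => poly_kernel d n T1 X Y * poly_kernel d n T2 X Y) _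
                            (fun X => poly_eval e1 X * poly_eval e2 X)); [| auto |].
    + intros; unfold poly_kernel. rewrite rprod_mul. apply rprod_ext; intros; rewrite pow_add; auto.
    + apply dominated_mul; auto; apply psd_poly_kernel.
Qed.

End PolyKernel.

Section NetworkKernelUniversal.
Variables (Sp : Pt -> Prop) (d n N : nat) (f : nat -> R -> R) (b : nat -> nat -> R).
Hypothesis f_series : forall i x, (1 <= i <= N)%nat ->
  infinite_sum (fun t => Rabs (b i t) * x ^ t) (f i x).
Hypothesis N_ge_2 : (2 <= N)%nat.
Hypothesis coef_nonzero : forall i t, (1 <= i <= N)%nat -> b i t <> 0.

Let coef_nonneg i t : 0 <= Rabs (b i t) := Rabs_pos (b i t).
Let coef_pos i t : (1 <= i <= N)%nat -> 0 < Rabs (b i t).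
Proof. intros; apply Rabs_pos_lt, coef_nonzero; auto. Qed.

Lemma poly_kernel_le_first_pow T : exists C, 0 <= C /\
  kernel_le Sp (poly_kernel d n T) (fun X Y => C * first_kernel d n f X Y ^ n).
Proof.
  destruct (pos_lower_bound (fun t => Rabs (b 1%nat t)) T) as [m [Hm Hm2]]; [intros; apply coef_pos; lia|].
  set (C1 := 2 ^ T * / m).
  assert (HC1 : 0 <= C1) by (apply Rmult_le_pos; [apply pow_le; lra | apply Rlt_le, Rinv_0_lt_compat; auto]).
  assert (Hfac : forall i, kernel_le Sp (fun X Y => (1 + patch_kernel d i X Y) ^ T)
                                        (fun X Y => C1 * f 1%nat (patch_kernel d i X Y))).
  { intros i. eapply kernel_le_trans; [apply kernel_le_one_plus_pow, psd_patch_kernel|].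
    apply (kernel_le_ext Sp (fun X Y => 2 ^ T * rsum (S T) (fun t => patch_kernel d i X Y ^ t))
             (fun X Y => 2 ^ T * (/ m * f 1%nat (patch_kernel d i X Y)))); [auto | intros; unfold C1; ring |].
    apply kernel_le_scale; [apply pow_le; lra|].
    apply (power_sum_kernel_le_series _ _ _ _ _ _ (coef_nonneg 1%nat) (fun x => f_series 1%nat x ltac:(lia)));
      auto using psd_patch_kernel. }
  exists (C1 ^ n). split; [apply pow_le; auto|].
  apply kernel_le_trans with (fun X Y => C1 ^ n * rprod n (fun i => f 1%nat (patch_kernel d i X Y))).
  - apply (kernel_le_ext Sp (poly_kernel d n T) (fun X Y => rprod n (fun i => C1 * f 1%nat (patch_kernel d i X Y))));
      [intros; auto | intros; rewrite rprod_scal; auto |].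
    apply kernel_le_rprod. intros i Hi. split; [apply psd_kernel_pow, psd_one_plus_patch | apply Hfac].
  - apply kernel_le_scale; [apply pow_le; auto|].
    apply (kernel_le_rprod_pow_rsum Sp n (fun i X Y => f 1%nat (patch_kernel d i X Y))).
    intros; apply (psd_first_term Sp d N f b); auto; lia.
Qed.

Lemma first_pow_le_layer2 : kernel_le Sp (fun X Y => first_kernel d n f X Y ^ n)
  (fun X Y => / Rabs (b 2%nat n) * layer_kernel d n f 2 X Y).
Proof.
  apply (pow_kernel_le_series _ _ _ _ _ (coef_nonneg 2%nat) (fun x => f_series 2%nat x ltac:(lia))).
  - apply (psd_first_kernel Sp d n N f b); auto; lia.
  - apply coef_pos; lia.
Qed.

Lemma layer_le_next k : (1 <= k)%nat -> (S k <= N)%nat ->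
  kernel_le Sp (layer_kernel d n f k) (fun X Y => / Rabs (b (S k) 1%nat) * layer_kernel d n f (S k) X Y).
Proof.
  intros H1 H2.
  apply (kernel_le_ext Sp (fun X Y => layer_kernel d n f k X Y ^ 1)
                          (fun X Y => / Rabs (b (S k) 1%nat) * f (S k) (layer_kernel d n f k X Y)));
    [intros; ring | intros; rewrite layer_kernel_S; auto |].
  apply (pow_kernel_le_series _ _ _ _ _ (coef_nonneg (S k)) (fun x => f_series (S k) x ltac:(lia))).
  - apply (psd_layer_kernel Sp d n N f b); auto; lia.
  - apply coef_pos; lia.
Qed.

Lemma poly_kernel_le_layer T k : (2 <= k <= N)%nat ->
  exists C, 0 <= C /\ kernel_le Sp (poly_kernel d n T) (fun X Y => C * layer_kernel d n f k X Y).
Proof.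
  induction k as [|k IH]; intros Hk; [lia|]. destruct (Nat.eq_dec k 1) as [->|Hk1].
  - destruct (poly_kernel_le_first_pow T) as [C [HC HCT]].
    exists (C * / Rabs (b 2%nat n)). split; [apply Rmult_le_pos; auto; apply Rlt_le, Rinv_0_lt_compat, coef_pos; lia|].
    eapply kernel_le_trans; [apply HCT|].
    eapply kernel_le_ext; [| | apply (kernel_le_scale Sp C _ _ HC first_pow_le_layer2)]; intros; cbv beta; [auto | ring].
  - destruct IH as [C [HC HCk]]; [lia|].
    exists (C * / Rabs (b (S k) 1%nat)). split; [apply Rmult_le_pos; auto; apply Rlt_le, Rinv_0_lt_compat, coef_pos; lia|].
    eapply kernel_le_trans; [apply HCk|].
    eapply kernel_le_ext; [| | apply (kernel_le_scale Sp C _ _ HC (layer_le_next k ltac:(lia) ltac:(lia)))];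
      intros; cbv beta; [auto | ring].
Qed.

Lemma dominated_poly e : poly_wf n d e -> dominated Sp (layer_kernel d n f N) (poly_eval e).
Proof.
  intros Hw. destruct (dominated_poly_kernel Sp d n e Hw) as [T HT].
  destruct (poly_kernel_le_layer T N ltac:(lia)) as [C [HC HC2]].
  apply (dominated_le_scale Sp _ _ _ C HT HC HC2).
Qed.

End NetworkKernelUniversal.

Section NetworkKernelContinuity.
Variables (d n N : nat) (f : nat -> R -> R) (b : nat -> nat -> R).
Hypothesis f_series : forall i x, (1 <= i <= N)%nat ->
  infinite_sum (fun t => Rabs (b i t) * x ^ t) (f i x).
Hypothesis d_pos : (1 <= d)%nat.
Let Sp := inI d n.

Let coef_nonneg i t : 0 <= Rabs (b i t) := Rabs_pos (b i t).

Definition kernel_bounded_lipschitz (K : kernel) (B L : R) :=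
  (forall x y, Sp x -> Sp y -> Rabs (K x y) <= B) /\
  (forall x y x' y' del, Sp x -> Sp y -> Sp x' -> Sp y' -> sup_close d n del x x' -> sup_close d n del y y' ->
     Rabs (K x' y' - K x y) <= L * del).

Lemma layer_series_abs_le i B u : (1 <= i <= N)%nat -> Rabs u <= B -> Rabs (f i u) <= f i B.
Proof.
  intros Hi Hu. pose proof (fun x => f_series i x Hi) as Hf.
  eapply Rle_trans; [apply (Rabs_series_le _ (f i) (coef_nonneg i) Hf)|].
  apply (series_mono _ (f i) (coef_nonneg i) Hf); auto using Rabs_pos.
Qed.

Lemma layer_series_lipschitz i B L u u' : (1 <= i <= N)%nat -> 1 <= B -> Rabs u <= B -> Rabs u' <= B ->
  Rabs (u' - u) <= L -> Rabs (f i u' - f i u) <= f i (2 * B) * L.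
Proof.
  intros Hi HB H1 H2 H3. pose proof (fun x => f_series i x Hi) as Hf.
  eapply Rle_trans; [apply (series_lipschitz _ (f i) (coef_nonneg i) Hf B u' u); auto|].
  apply Rmult_le_compat_l; auto. apply (series_nonneg _ (f i) (coef_nonneg i) Hf). lra.
Qed.

Lemma patch_kernel_bounded_lipschitz i : (i < n)%nat ->
  kernel_bounded_lipschitz (patch_kernel d i) (INR d) (2 * INR d).
Proof.
  intros Hi. split.
  - intros x y Hx Hy. unfold patch_kernel. eapply Rle_trans; [apply Rabs_rsum_le|].
    replace (INR d) with (rsum d (fun _ => 1)) by (rewrite rsum_const; ring).
    apply rsum_le; intros k Hk. rewrite Rabs_mult.
    pose proof (coord_bound d n x i k Hx Hi Hk). pose proof (coord_bound d n y i k Hy Hi Hk).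
    assert (Rabs (x i k) * Rabs (y i k) <= 1 * 1) by (apply Rmult_le_compat; auto; apply Rabs_pos). lra.
  - intros x y x' y' del Hx Hy Hx' Hy' Hc1 Hc2. unfold patch_kernel. rewrite <- rsum_minus.
    eapply Rle_trans; [apply Rabs_rsum_le|].
    replace (2 * INR d * del) with (rsum d (fun _ => 2 * del)) by (rewrite rsum_const; ring).
    apply rsum_le; intros k Hk.
    replace (x' i k * y' i k - x i k * y i k) with (x' i k * (y' i k - y i k) + y i k * (x' i k - x i k)) by ring.
    eapply Rle_trans; [apply Rabs_triang|]. rewrite !Rabs_mult.
    pose proof (coord_bound d n x' i k Hx' Hi Hk). pose proof (coord_bound d n y i k Hy Hi Hk).
    specialize (Hc1 i k Hi Hk). specialize (Hc2 i k Hi Hk). rewrite Rabs_minus_sym in Hc1, Hc2.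
    assert (Rabs (x' i k) * Rabs (y' i k - y i k) <= 1 * del) by (apply Rmult_le_compat; try lra; apply Rabs_pos).
    assert (Rabs (y i k) * Rabs (x' i k - x i k) <= 1 * del) by (apply Rmult_le_compat; try lra; apply Rabs_pos).
    lra.
Qed.

Lemma first_kernel_bounded_lipschitz : (1 <= N)%nat ->
  kernel_bounded_lipschitz (first_kernel d n f) (INR n * f 1%nat (INR d) + 1)
                           (INR n * (f 1%nat (2 * INR d) * (2 * INR d))).
Proof.
  intros HN.
  assert (Hd1 : 1 <= INR d) by (apply (le_INR 1 d) in d_pos; simpl in d_pos; auto).
  split.
  - intros x y Hx Hy. unfold first_kernel. eapply Rle_trans; [apply Rabs_rsum_le|].
    apply Rle_trans with (rsum n (fun _ => f 1%nat (INR d))); [|rewrite rsum_const; lra].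
    apply rsum_le; intros i Hi.
    apply layer_series_abs_le; [lia | apply (patch_kernel_bounded_lipschitz i Hi); auto].
  - intros x y x' y' del Hx Hy Hx' Hy' Hc1 Hc2. unfold first_kernel. rewrite <- rsum_minus.
    eapply Rle_trans; [apply Rabs_rsum_le|].
    apply Rle_trans with (rsum n (fun _ => f 1%nat (2 * INR d) * (2 * INR d * del))); [|rewrite rsum_const; right; ring].
    apply rsum_le; intros i Hi. destruct (patch_kernel_bounded_lipschitz i Hi) as [Hb Hl].
    apply layer_series_lipschitz; auto; lia.
Qed.

Lemma layer_kernel_bounded_lipschitz k : (1 <= k <= N)%nat ->
  exists B L, 1 <= B /\ kernel_bounded_lipschitz (layer_kernel d n f k) B L.
Proof.
  induction k as [|[|k] IH]; intros Hk; [lia | |].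
  - exists (INR n * f 1%nat (INR d) + 1), (INR n * (f 1%nat (2 * INR d) * (2 * INR d))). split.
    + assert (0 <= f 1%nat (INR d)).
      { apply (series_nonneg _ _ (coef_nonneg 1%nat) (fun x => f_series 1%nat x ltac:(lia))).
        apply pos_INR. }
      pose proof (pos_INR n). nra.
    + apply first_kernel_bounded_lipschitz. lia.
  - destruct IH as [B [L [HB [Hb Hl]]]]; [lia|].
    assert (Hf0 : 0 <= f (S (S k)) B)
      by (apply (series_nonneg _ _ (coef_nonneg _) (fun x => f_series _ x Hk)); lra).
    exists (f (S (S k)) B + 1), (f (S (S k)) (2 * B) * L). split; [lra|]. split.
    + intros x y Hx Hy. rewrite (layer_kernel_S d n f (S k)) by lia.
      apply Rle_trans with (f (S (S k)) B); [|lra].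
      apply layer_series_abs_le; auto.
    + intros x y x' y' del Hx Hy Hx' Hy' Hc1 Hc2. rewrite !(layer_kernel_S d n f (S k)) by lia.
      rewrite Rmult_assoc. apply layer_series_lipschitz; auto.
Qed.

Lemma layer_kernel_continuous k : (1 <= k <= N)%nat -> kernel_continuous_on_I d n (layer_kernel d n f k).
Proof.
  intros Hk x y Hx Hy eps Heps. destruct (layer_kernel_bounded_lipschitz k Hk) as [B [L [_ [_ Hl]]]].
  assert (HL : 0 <= L).
  { pose proof (Hl x y x y 1 Hx Hy Hx Hy) as H0. rewrite Rminus_diag, Rabs_R0, Rmult_1_r in H0.
    apply H0; intros i j _ _; rewrite Rminus_diag, Rabs_R0; lra. }
  exists (eps / (L + 1)). split; [apply Rdiv_lt_0_compat; lra|].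
  intros x' y' Hx' Hy' H1 H2. apply sup_close_of_dist in H1, H2.
  eapply Rle_lt_trans; [apply (Hl x y x' y' _ Hx Hy Hx' Hy' H1 H2)|].
  apply (Rmult_lt_reg_l (L + 1)); [lra|].
  replace ((L + 1) * (L * (eps / (L + 1)))) with (L * eps) by (field; lra). nra.
Qed.

End NetworkKernelContinuity.

Lemma sup_continuous_of_continuous d n g : continuous_on_I d n g -> sup_continuous d n g.
Proof.
  intros H x Hx eps Heps. destruct (H x Hx eps Heps) as [del [Hd Hd2]].
  assert (Hc : 0 <= INR n * INR d) by (apply Rmult_le_pos; apply pos_INR).
  exists (del / (2 * (INR n * INR d + 1))). split; [apply Rdiv_lt_0_compat; lra|].
  intros y Hy Hcl. apply Hd2; auto. eapply Rle_lt_trans; [apply (dist_le_of_sup_close d n); [|eauto]|].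
  - apply Rdiv_lt_0_compat; lra.
  - replace ((INR n * INR d + 1) * (del / (2 * (INR n * INR d + 1)))) with (del / 2) by (field; lra). lra.
Qed.

Lemma Rabs_div_fact r t : Rabs (r / INR (fact t)) = Rabs r / INR (fact t).
Proof.
  assert (0 < INR (fact t)) by (apply lt_0_INR, lt_O_fact).
  unfold Rdiv. rewrite Rabs_mult, Rabs_inv, (Rabs_right (INR (fact t))); lra.
Qed.

Theorem mainTheorem1
  (d n N : nat) (hd : (2 <= d)%nat) (hn : (1 <= n)%nat) (hN : (2 <= N)%nat)
  (sigma : nat -> R -> R) (D : nat -> nat -> R -> R) (f : nat -> R -> R)
  (hD : forall i, (1 <= i <= N)%nat -> deriv_tower (sigma i) (D i))
  (hT : forall i, (1 <= i <= N)%nat -> taylor_decomp (sigma i) (D i))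
  (hf : forall i x, (1 <= i <= N)%nat ->
          infinite_sum (fun t => Rabs (D i t 0) / INR (fact t) * x ^ t) (f i x)) :
  psd_kernel (inI d n) (KN d n N f) /\
  (forall (dd nn pp : nat -> nat) (gam : nat -> nat -> nat -> R)
          (W : nat -> nat -> nat -> R) (WN : nat -> R),
     arch_ok d n N dd nn pp ->
     in_RKHS (inI d n) (KN d n N f) (cnn sigma dd nn pp gam W N WN)) /\
  ((forall i t, (1 <= i <= N)%nat -> D i t 0 <> 0) -> c_universal d n (KN d n N f)).
Proof.
  set (b := fun i t => D i t 0 / INR (fact t)).
  assert (Hf : forall i x, (1 <= i <= N)%nat -> infinite_sum (fun t => Rabs (b i t) * x ^ t) (f i x)).
  { intros i x Hi. apply (infinite_sum_ext (fun t => Rabs (D i t 0) / INR (fact t) * x ^ t)); auto.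
    intros t. unfold b. rewrite Rabs_div_fact. auto. }
  assert (Hsig : forall i x, (1 <= i <= N)%nat -> infinite_sum (fun t => b i t * x ^ t) (sigma i x))
    by (intros; apply hT; auto).
  assert (Hpsd : psd_kernel (inI d n) (layer_kernel d n f N)) by (apply (psd_layer_kernel _ d n N f b); auto; lia).
  split; [|split].
  - exact Hpsd.
  - intros dd nn pp gam W WN [Hd1 [Hp1 [Hn1 _]]].
    apply dominated_in_RKHS; auto. apply (dominated_cnn _ d n N f b sigma); auto; lia.
  - intros Hnz. split; [apply (layer_kernel_continuous d n N f b); auto; lia|].
    intros g Hg eps Heps.
    destruct (stone_weierstrass d n g (sup_continuous_of_continuous d n g Hg) eps Heps) as [e [Hw He]].
    exists (poly_eval e). split; auto.
    apply dominated_in_RKHS; auto. apply (dominated_poly _ d n N f b); auto.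
    intros i t Hi. apply Rmult_integral_contrapositive_currified; [apply Hnz; auto|].
    apply Rinv_neq_0_compat, not_0_INR, fact_neq_0.
Qed.
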